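(* Let $\Omega\subseteq\mathbb R^m$ be open, let $k\in\{0,\dots,m\}$ with $2k\neq m$, and let $F_k\in\mathcal C^4(\Omega)$ take values in the $k$-vectors of $\mathbb R_{0,m}$. Suppose $F_k$ is harmonic in $\Omega$ (respectively, inframonogenic in $\Omega$). Then $F_k$ is also inframonogenic (respectively, harmonic) in $\Omega$ if and only if any one of the following holds: (i) $F_k(\underline x)\underline x$ is left $3$-monogenic in $\Omega$, i.e. $\partial_{\underline x}^3\big(F_k(\underline x)\underline x\big)=0$; (ii) $\underline xF_k(\underline x)$ is right $3$-monogenic in $\Omega$, i.e. $\big(\underline xF_k(\underline x)\big)\partial_{\underline x}^3=0$; (iii) $\underline xF_k(\underline x)\underline x$ is biharmonic in $\Omega$, i.e. $\Delta_{\underline x}^2\big(\underline xF_k(\underline x)\underline x\big)=0$.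
   Context: $\mathbb R_{0,m}$ is the $2^m$-dimensional real Clifford algebra generated by the orthonormal basis $e_1,\dots,e_m$ of $\mathbb R^m$ with relations $e_je_k+e_ke_j=-2\delta_{jk}$; it has basis $e_A=e_{j_1}\cdots e_{j_k}$, $A=\{j_1<\dots<j_k\}$, and the $k$-vectors are $\sum_{|A|=k}a_Ae_A$, $a_A\in\mathbb R$. A point of $\mathbb R^m$ is identified with $\underline x=\sum_j x_je_j$. The Dirac operator $\partial_{\underline x}=\sum_j e_j\partial_{x_j}$ acts from the left, $\partial_{\underline x}f=\sum_j e_j\partial_{x_j}f$, or from the right, $f\partial_{\underline x}=\sum_j(\partial_{x_j}f)e_j$; powers denote iterated application on the same side. $f\in\mathcal C^2$ is inframonogenic if $\partial_{\underline x}f\partial_{\underline x}=\sum_{i,j}e_i(\partial_{x_i}\partial_{x_j}f)e_j=0$. $\Delta_{\underline x}=\sum_j\partial_{x_j}^2$. *)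

From Stdlib Require Import Reals Arith Lia ClassicalEpsilon.
Open Scope R_scope.

Fixpoint sumR (n : nat) (f : nat -> R) : R :=
  match n with O => 0 | S n' => sumR n' f + f n' end.

Fixpoint sumN (n : nat) (f : nat -> nat) : nat :=
  match n with O => O | S n' => (sumN n' f + f n')%nat end.

(** Basis blades e_A, A ⊆ {0,..,m-1}, are encoded by bitmasks A < 2^m
    (bit i set  <=>  e_{i+1} occurs in e_A; the generator e_{j+1} of the
    paper is the bitmask 2^j).  An element is its coefficient function
    nat -> R; only coefficients of bitmasks A < 2^m are meaningful. *)
Definition Cl := nat -> R.

Definition inA (A i : nat) : nat := if Nat.testbit A i then 1%nat else 0%nat.

Definition grade (m A : nat) : nat := sumN m (fun i => inA A i).

(** sign of e_A e_B = sign * e_{A xor B}, using e_i e_j = - e_j e_i (i<>j)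
    and e_i^2 = -1: number of inversions plus number of common generators. *)
Definition blade_sign_exp (m A B : nat) : nat :=
  (sumN m (fun b => inA B b * sumN m (fun a => if Nat.ltb b a then inA A a else 0%nat))
   + sumN m (fun i => inA A i * inA B i))%nat.

Definition blade_sign (m A B : nat) : R :=
  if Nat.even (blade_sign_exp m A B) then 1 else -1.

Definition cl_zero (m : nat) (u : Cl) : Prop := forall A, (A < 2 ^ m)%nat -> u A = 0.

Definition cl_add (u v : Cl) : Cl := fun A => u A + v A.

Definition cl_mul (m : nat) (u v : Cl) : Cl := fun C =>
  sumR (2 ^ m) (fun A => sumR (2 ^ m) (fun B =>
    if Nat.eqb (Nat.lxor A B) C then blade_sign m A B * u A * v B else 0)).

Definition gen (j : nat) : Cl := fun A => if Nat.eqb A (2 ^ j) then 1 else 0.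

Definition cl_sum (n : nat) (g : nat -> Cl) : Cl := fun A => sumR n (fun j => g j A).

Definition is_kvector (m k : nat) (u : Cl) : Prop :=
  forall A, (A < 2 ^ m)%nat -> grade m A <> k -> u A = 0.

(** * Points of R^m: sequences nat -> R, with coordinates x_{j+1} = x j for
    j < m; R^m is the subspace of sequences vanishing at indices >= m. *)
Definition pt := nat -> R.

Definition in_Rm (m : nat) (x : pt) : Prop := forall j, (m <= j)%nat -> x j = 0.

Definition vec (m : nat) (x : pt) : Cl := cl_sum m (fun j A => x j * gen j A).

Definition open_Rm (m : nat) (Om : pt -> Prop) : Prop :=
  (forall x, Om x -> in_Rm m x) /\
  (forall x, Om x -> exists eps, 0 < eps /\
     forall y, in_Rm m y -> (forall j, (j < m)%nat -> Rabs (y j - x j) < eps) -> Om y).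

Definition shift (x : pt) (j : nat) (t : R) : pt :=
  fun i => if Nat.eqb i j then x i + t else x i.

(** partial derivative d/dx_{j+1} of a real function (chosen classically;
    it is the genuine partial derivative wherever this one exists) *)
Definition pd (j : nat) (f : pt -> R) (x : pt) : R :=
  epsilon (inhabits 0) (fun l => derivable_pt_lim (fun t => f (shift x j t)) 0 l).

Definition cont_on (m : nat) (Om : pt -> Prop) (f : pt -> R) : Prop :=
  forall x, Om x -> forall eps, 0 < eps -> exists delta, 0 < delta /\
    forall y, in_Rm m y -> (forall j, (j < m)%nat -> Rabs (y j - x j) < delta) ->
      Rabs (f y - f x) < eps.

Fixpoint Ck (m n : nat) (Om : pt -> Prop) (f : pt -> R) : Prop :=
  cont_on m Om f /\
  match n with
  | O => True
  | S n' => forall j, (j < m)%nat ->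
      (forall x, Om x -> derivable_pt_lim (fun t => f (shift x j t)) 0 (pd j f x)) /\
      Ck m n' Om (pd j f)
  end.

Definition CkCl (m n : nat) (Om : pt -> Prop) (F : pt -> Cl) : Prop :=
  forall A, (A < 2 ^ m)%nat -> Ck m n Om (fun x => F x A).

Definition pdC (j : nat) (F : pt -> Cl) : pt -> Cl := fun x A => pd j (fun y => F y A) x.

Definition DirL (m : nat) (F : pt -> Cl) : pt -> Cl :=
  fun x => cl_sum m (fun j => cl_mul m (gen j) (pdC j F x)).
Definition DirR (m : nat) (F : pt -> Cl) : pt -> Cl :=
  fun x => cl_sum m (fun j => cl_mul m (pdC j F x) (gen j)).
Definition Lap (m : nat) (F : pt -> Cl) : pt -> Cl :=
  fun x => cl_sum m (fun j => pdC j (pdC j F) x).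

Definition harmonic (m : nat) (Om : pt -> Prop) (F : pt -> Cl) : Prop :=
  forall x, Om x -> cl_zero m (Lap m F x).

Definition inframonogenic (m : nat) (Om : pt -> Prop) (F : pt -> Cl) : Prop :=
  forall x, Om x -> cl_zero m (cl_sum m (fun i => cl_sum m (fun j =>
     cl_mul m (cl_mul m (gen i) (pdC i (pdC j F) x)) (gen j)))).

Definition left3mono_Fx (m : nat) (Om : pt -> Prop) (F : pt -> Cl) : Prop :=
  forall x, Om x ->
    cl_zero m (DirL m (DirL m (DirL m (fun y => cl_mul m (F y) (vec m y)))) x).

Definition right3mono_xF (m : nat) (Om : pt -> Prop) (F : pt -> Cl) : Prop :=
  forall x, Om x ->
    cl_zero m (DirR m (DirR m (DirR m (fun y => cl_mul m (vec m y) (F y)))) x).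

Definition biharm_xFx (m : nat) (Om : pt -> Prop) (F : pt -> Cl) : Prop :=
  forall x, Om x ->
    cl_zero m (Lap m (Lap m (fun y => cl_mul m (cl_mul m (vec m y) (F y)) (vec m y))) x).

From Stdlib Require Import Reals Arith Lia Lra.
From Stdlib Require Import ClassicalEpsilon FunctionalExtensionality PropExtensionality.
Open Scope R_scope.

(** Left and right multiplication by a generator [e_j] act on coefficients as
    signed permutations of blades ([eL], [eR]); the Dirac operators [Dl], [Dr]
    and the Laplacian are written with them.  The Clifford relations give
    [Dl^2 = Dr^2 = -Lap] and [Dl Dr = Dr Dl], and the grade operator
    [T u = sum_j e_j u e_j], which multiplies [k]-vectors by
    [c = (-1)^k (2k - m)], satisfies [T (Dl G) + Dl (T G) = -2 Dr G].  With
    the product rules for [G x] and [x G] this yields, for a [k]-vector [F],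
      [Dl^3 (F x) = (x F) Dr^3 = -2 Dl Dr F - c Lap F] and
      [Lap^2 (x F x) = 8 Dl Dr F + 4 c Lap F]
    up to terms in [Dl Lap F], [Dr Lap F], [Lap^2 F].  These three vanish when
    [F] is harmonic and also when [F] is inframonogenic ([Dl Dr F = 0]), so
    each expression is a nonzero multiple of [Dl Dr F], resp. of [Lap F]
    (as [c <> 0] when [2k <> m]). *)

Lemma sumR_ext n f g : (forall i, (i < n)%nat -> f i = g i) -> sumR n f = sumR n g.
Proof.
  induction n as [|n IH]; intros H; simpl; auto.
  rewrite IH by (intros; apply H; lia). rewrite H by lia. reflexivity.
Qed.

Lemma sumR_add n f g : sumR n (fun i => f i + g i) = sumR n f + sumR n g.
Proof. induction n as [|n IH]; simpl; [ring | rewrite IH; ring]. Qed.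

Lemma sumR_scal n c f : sumR n (fun i => c * f i) = c * sumR n f.
Proof. induction n as [|n IH]; simpl; [ring | rewrite IH; ring]. Qed.

Lemma sumR_opp n f : sumR n (fun i => - f i) = - sumR n f.
Proof. induction n as [|n IH]; simpl; [ring | rewrite IH; ring]. Qed.

Lemma sumR_zero n : sumR n (fun _ => 0) = 0.
Proof. induction n as [|n IH]; simpl; [ring | rewrite IH; ring]. Qed.

Lemma sumR_const1 n : sumR n (fun _ => 1) = INR n.
Proof. induction n as [|n IH]; [reflexivity|]. rewrite S_INR. simpl. rewrite IH. ring. Qed.

Lemma sumR_swap n p f :
  sumR n (fun i => sumR p (fun j => f i j)) = sumR p (fun j => sumR n (fun i => f i j)).
Proof.
  induction n as [|n IH]; simpl.
  - symmetry; apply sumR_zero.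
  - rewrite IH, <- sumR_add. reflexivity.
Qed.

Lemma sumR_kron n a f :
  (a < n)%nat -> sumR n (fun i => if Nat.eqb i a then f i else 0) = f a.
Proof.
  induction n as [|n IH]; intros H; simpl; [lia|].
  destruct (Nat.eqb_spec n a) as [->|Hn].
  - rewrite (sumR_ext _ _ (fun _ => 0)), sumR_zero; [ring|].
    intros i Hi. destruct (Nat.eqb_spec i a); [lia | reflexivity].
  - rewrite IH by lia. ring.
Qed.

Lemma sumR_symmetrize n f g :
  (forall i j, (i < n)%nat -> (j < n)%nat -> f i j + f j i = g i j + g j i) ->
  sumR n (fun i => sumR n (fun j => f i j)) = sumR n (fun i => sumR n (fun j => g i j)).
Proof.
  intros H.
  assert (Sym : forall h, 2 * sumR n (fun i => sumR n (fun j => h i j)) =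
      sumR n (fun i => sumR n (fun j => h i j + h j i))).
  { intros h.
    rewrite (sumR_ext n (fun i => sumR n (fun j => h i j + h j i))
      (fun i => sumR n (fun j => h i j) + sumR n (fun j => h j i))) by (intros; apply sumR_add).
    rewrite sumR_add, (sumR_swap n n (fun i j => h j i)). ring. }
  apply (Rmult_eq_reg_l 2); [|lra]. rewrite !Sym.
  apply sumR_ext; intros i Hi; apply sumR_ext; intros j Hj; auto.
Qed.

Lemma sumR_diag n h :
  sumR n (fun i => sumR n (fun j => if Nat.eqb i j then h i else 0)) = sumR n h.
Proof.
  apply sumR_ext; intros i Hi.
  rewrite (sumR_ext n _ (fun j => if Nat.eqb j i then h j else 0)) by
    (intros j _; rewrite Nat.eqb_sym; destruct (Nat.eqb_spec j i); subst; reflexivity).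
  apply sumR_kron; auto.
Qed.

Lemma sumN_ext n f g : (forall i, (i < n)%nat -> f i = g i) -> sumN n f = sumN n g.
Proof.
  induction n as [|n IH]; intros H; simpl; auto.
  rewrite IH by (intros; apply H; lia). rewrite H by lia. reflexivity.
Qed.

Lemma INR_sumN n f : INR (sumN n f) = sumR n (fun i => INR (f i)).
Proof. induction n as [|n IH]; simpl; auto. rewrite plus_INR, IH. reflexivity. Qed.

Lemma sumN_change n f g i : (i < n)%nat -> (forall l, (l < n)%nat -> l <> i -> g l = f l) ->
  (sumN n g + f i = sumN n f + g i)%nat.
Proof.
  induction n as [|n IH]; intros Hi H; simpl; [lia|].
  destruct (Nat.eq_dec n i) as [->|Hn].
  - rewrite (sumN_ext i g f) by (intros; apply H; lia). lia.
  - rewrite H by lia. specialize (IH ltac:(lia) ltac:(intros; apply H; lia)). lia.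
Qed.

Lemma sumN_kron n j f :
  (j < n)%nat -> sumN n (fun a => if Nat.eqb a j then f a else 0%nat) = f j.
Proof.
  induction n as [|n IH]; intros H; simpl; [lia|].
  destruct (Nat.eqb_spec n j) as [->|Hn].
  - rewrite (sumN_ext j _ (fun _ => 0%nat)).
    + clear. induction j; simpl; lia.
    + intros i Hi. destruct (Nat.eqb_spec i j); [lia | reflexivity].
  - rewrite IH by lia. lia.
Qed.

Lemma sumN_below n j f :
  (j <= n)%nat -> sumN n (fun a => if Nat.ltb a j then f a else 0%nat) = sumN j f.
Proof.
  induction n as [|n IH]; intros H; simpl.
  - replace j with 0%nat by lia. reflexivity.
  - destruct (Nat.eq_dec j (S n)) as [->|Hn].
    + simpl. rewrite (sumN_ext n _ f) by (intros; destruct (Nat.ltb_spec i (S n)); lia).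
      destruct (Nat.ltb_spec n (S n)); lia.
    + rewrite IH by lia. destruct (Nat.ltb_spec n j); lia.
Qed.

Lemma sumN_split n j f : (j < n)%nat ->
  sumN n f = (sumN n (fun a => if Nat.ltb a j then f a else 0%nat) + f j +
              sumN n (fun a => if Nat.ltb j a then f a else 0%nat))%nat.
Proof.
  intros H. induction n as [|n IH]; simpl; [lia|].
  destruct (Nat.eq_dec j n) as [->|Hn].
  - rewrite (sumN_ext n (fun a => if Nat.ltb n a then f a else 0%nat) (fun _ => 0%nat))
      by (intros; destruct (Nat.ltb_spec n i); lia).
    rewrite (sumN_ext n (fun a => if Nat.ltb a n then f a else 0%nat) f)
      by (intros; destruct (Nat.ltb_spec i n); lia).
    assert (Z : sumN n (fun _ => 0%nat) = 0%nat) by (clear; induction n; simpl; lia).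
    destruct (Nat.ltb_spec n n); lia.
  - rewrite IH by lia. destruct (Nat.ltb_spec n j); destruct (Nat.ltb_spec j n); lia.
Qed.

Definition sg (n : nat) : R := (-1) ^ n.

Lemma sg_add a b : sg (a + b) = sg a * sg b.
Proof. apply pow_add. Qed.

Lemma sg_S n : sg (S n) = - sg n.
Proof. unfold sg; simpl; ring. Qed.

Lemma sg_pm n : sg n = 1 \/ sg n = -1.
Proof. induction n as [|n [E|E]]; rewrite ?sg_S, ?E; [left; reflexivity | right | left]; ring. Qed.

Lemma sg_sq n : sg n * sg n = 1.
Proof. destruct (sg_pm n) as [E|E]; rewrite E; ring. Qed.

Lemma even_sg n : (if Nat.even n then 1 else -1) = sg n.
Proof.
  induction n as [n IH] using lt_wf_ind.
  destruct n as [|[|n]]; [reflexivity | unfold sg; simpl; ring |].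
  change (Nat.even (S (S n))) with (Nat.even n).
  rewrite IH by lia. rewrite !sg_S. ring.
Qed.

Lemma sg_par a b c : (a + 2 * c = b)%nat -> sg a = sg b.
Proof.
  intros <-. rewrite sg_add. unfold sg. rewrite pow_mult.
  replace ((-1) ^ 2) with 1 by (simpl; ring). rewrite pow1. ring.
Qed.

Lemma sg_flip a b x : (x <= 1)%nat -> (a + x = b + (1 - x))%nat -> sg a = - sg b.
Proof.
  intros Hx H. destruct x as [|[|x]]; [| |lia].
  - replace a with (S b) by lia. apply sg_S.
  - replace b with (S a) by lia. rewrite sg_S; ring.
Qed.

Lemma sg_bit x : (x <= 1)%nat -> sg x = 1 - 2 * INR x.
Proof. intros H; destruct x as [|[|x]]; [| |lia]; unfold sg; simpl; ring. Qed.

Definition flip (C j : nat) : nat := Nat.lxor C (2 ^ j).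
Definition lo (j C : nat) : nat := sumN j (fun i => inA C i).

Lemma inA_le C i : (inA C i <= 1)%nat.
Proof. unfold inA; destruct (Nat.testbit C i); lia. Qed.

Lemma inA_flip C j i : inA (flip C j) i = if Nat.eqb i j then (1 - inA C i)%nat else inA C i.
Proof.
  unfold inA, flip. rewrite Nat.lxor_spec, Nat.pow2_bits_eqb.
  destruct (Nat.eqb_spec i j) as [->|Hij]; rewrite ?Nat.eqb_refl.
  - destruct (Nat.testbit C j); reflexivity.
  - destruct (Nat.eqb_spec j i); [lia|]. destruct (Nat.testbit C i); reflexivity.
Qed.

Lemma inA_flip_self C j : inA (flip C j) j = (1 - inA C j)%nat.
Proof. rewrite inA_flip, Nat.eqb_refl; reflexivity. Qed.

Lemma inA_flip_other C i j : i <> j -> inA (flip C i) j = inA C j.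
Proof. intros H. rewrite inA_flip. destruct (Nat.eqb_spec j i); [lia | reflexivity]. Qed.

Lemma inA_pow2 j a : inA (2 ^ j) a = if Nat.eqb a j then 1%nat else 0%nat.
Proof. unfold inA. rewrite Nat.pow2_bits_eqb, Nat.eqb_sym. destruct (Nat.eqb a j); reflexivity. Qed.

Lemma flip_flip C j : flip (flip C j) j = C.
Proof. unfold flip. rewrite Nat.lxor_assoc, Nat.lxor_nilpotent, Nat.lxor_0_r. reflexivity. Qed.

Lemma flip_comm C i j : flip (flip C i) j = flip (flip C j) i.
Proof. unfold flip. rewrite !Nat.lxor_assoc, (Nat.lxor_comm (2 ^ i)). reflexivity. Qed.

Lemma pow2_lt j m : (j < m)%nat -> (2 ^ j < 2 ^ m)%nat.
Proof. intros; apply Nat.pow_lt_mono_r; lia. Qed.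

Lemma lxor_lt A B m : (A < 2 ^ m)%nat -> (B < 2 ^ m)%nat -> (Nat.lxor A B < 2 ^ m)%nat.
Proof.
  intros HA HB.
  assert (E : Nat.lxor A B = Nat.lxor A B mod 2 ^ m).
  { apply Nat.bits_inj; intros i.
    destruct (Nat.lt_ge_cases i m).
    - rewrite Nat.mod_pow2_bits_low; auto.
    - rewrite Nat.mod_pow2_bits_high, Nat.lxor_spec by auto.
      rewrite <- (Nat.mod_small A (2 ^ m)), <- (Nat.mod_small B (2 ^ m)) by auto.
      rewrite !Nat.mod_pow2_bits_high by auto. reflexivity. }
  rewrite E. apply Nat.mod_upper_bound, Nat.pow_nonzero; lia.
Qed.

Lemma flip_lt C j m : (j < m)%nat -> (C < 2 ^ m)%nat -> (flip C j < 2 ^ m)%nat.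
Proof. intros; apply lxor_lt; auto; apply pow2_lt; auto. Qed.

Lemma grade_flip m C j :
  (j < m)%nat -> (grade m (flip C j) + inA C j = grade m C + (1 - inA C j))%nat.
Proof.
  intros Hj. unfold grade.
  pose proof (sumN_change m (fun i => inA C i) (fun i => inA (flip C j) i) j Hj) as E.
  simpl in E. rewrite inA_flip_self in E. apply E.
  intros l _ Hl. apply inA_flip_other; auto.
Qed.

Lemma lo_flip_ge C i j : (j <= i)%nat -> lo j (flip C i) = lo j C.
Proof. intros H. unfold lo. apply sumN_ext; intros l Hl. apply inA_flip_other; lia. Qed.

Lemma lo_flip_lt C i j :
  (i < j)%nat -> (lo j (flip C i) + inA C i = lo j C + (1 - inA C i))%nat.
Proof.
  intros H. unfold lo.
  pose proof (sumN_change j (fun l => inA C l) (fun l => inA (flip C i) l) i H) as E.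
  simpl in E. rewrite inA_flip_self in E. apply E.
  intros l _ Hl. apply inA_flip_other; auto.
Qed.

(** The signs in [e_(j+1) e_(flip C j) = sL j C e_C] and
    [e_(flip C j) e_(j+1) = sR m j C e_C]: [e_(j+1)] passes the generators
    below it (from the left), resp. above it (from the right), and squares
    to [-1]. *)
Definition sL (j C : nat) : R := sg (lo j C + 1 + inA C j).
Definition sR (m j C : nat) : R := sg (grade m C + lo j C + 1).

(** [eps i j] is the factor by which toggling [e_(i+1)], [i <> j], changes
    [sL j]; it changes [sR m j] by [- eps i j]. *)
Definition eps (i j : nat) : R := if Nat.ltb i j then -1 else 1.

Lemma eps_swap i j : i <> j -> eps j i = - eps i j.
Proof. intros H. unfold eps. destruct (Nat.ltb_spec i j), (Nat.ltb_spec j i); try lia; ring. Qed.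

Lemma sL_flip_self C j : sL j (flip C j) = - sL j C.
Proof.
  unfold sL. rewrite (lo_flip_ge C j j), inA_flip_self by lia.
  apply sg_flip with (x := inA C j); [apply inA_le|]. pose proof (inA_le C j). lia.
Qed.

Lemma sL_flip_other C i j : i <> j -> sL j (flip C i) = eps i j * sL j C.
Proof.
  intros H. unfold sL, eps. rewrite inA_flip_other by auto.
  destruct (Nat.ltb_spec i j) as [Hlt|Hge].
  - transitivity (- sg (lo j C + 1 + inA C j)); [|ring].
    apply sg_flip with (x := inA C i); [apply inA_le|].
    pose proof (lo_flip_lt C i j Hlt). lia.
  - rewrite lo_flip_ge by lia. ring.
Qed.

Lemma sR_flip_self m C j : (j < m)%nat -> sR m j (flip C j) = - sR m j C.
Proof.
  intros Hj. unfold sR. rewrite (lo_flip_ge C j j) by lia.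
  apply sg_flip with (x := inA C j); [apply inA_le|].
  pose proof (grade_flip m C j Hj). lia.
Qed.

Lemma sR_flip_other m C i j : (i < m)%nat -> i <> j -> sR m j (flip C i) = - eps i j * sR m j C.
Proof.
  intros Hi H. unfold sR, eps. pose proof (grade_flip m C i Hi) as G. pose proof (inA_le C i).
  destruct (Nat.ltb_spec i j) as [Hlt|Hge].
  - pose proof (lo_flip_lt C i j Hlt).
    transitivity (sg (grade m C + lo j C + 1)); [|ring].
    destruct (inA C i) as [|[|]]; simpl in *; try lia.
    + symmetry; apply sg_par with (c := 1%nat); lia.
    + apply sg_par with (c := 1%nat); lia.
  - rewrite (lo_flip_ge C i j Hge). transitivity (- sg (grade m C + lo j C + 1)); [|ring].
    apply sg_flip with (x := inA C i); auto. lia.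
Qed.

Lemma sR_sL m C j : sR m j C = sL j C * sg (grade m C + inA C j).
Proof. unfold sR, sL. rewrite <- sg_add. apply sg_par with (c := inA C j). lia. Qed.

Lemma blade_sign_genl m j C : (j < m)%nat -> blade_sign m (2 ^ j) (flip C j) = sL j C.
Proof.
  intros Hj. unfold blade_sign, blade_sign_exp. rewrite even_sg.
  rewrite (sumN_ext m (fun b => inA (flip C j) b *
      sumN m (fun a => if Nat.ltb b a then inA (2 ^ j) a else 0))%nat
     (fun b => if Nat.ltb b j then inA (flip C j) b else 0%nat)).
  2:{ intros b Hb.
      rewrite (sumN_ext m _
        (fun a => if Nat.eqb a j then (if Nat.ltb b a then 1 else 0) else 0)%nat)
        by (intros a _; rewrite inA_pow2; destruct (Nat.eqb a j), (Nat.ltb b a); reflexivity).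
      rewrite (sumN_kron m j (fun a => if Nat.ltb b a then 1 else 0)%nat Hj).
      destruct (Nat.ltb b j); lia. }
  rewrite sumN_below by lia.
  rewrite (sumN_ext m _ (fun i => if Nat.eqb i j then inA (flip C j) i else 0%nat))
    by (intros i _; rewrite inA_pow2; destruct (Nat.eqb i j); lia).
  rewrite sumN_kron by auto.
  change (sumN j (inA (flip C j))) with (lo j (flip C j)).
  rewrite (lo_flip_ge C j j), inA_flip_self by lia. unfold sL.
  pose proof (inA_le C j). destruct (inA C j) as [|[|]]; simpl; try lia.
  - f_equal; lia.
  - apply sg_par with (c := 1%nat). lia.
Qed.

Lemma blade_sign_genr m j C : (j < m)%nat -> blade_sign m (flip C j) (2 ^ j) = sR m j C.
Proof.
  intros Hj. unfold blade_sign, blade_sign_exp. rewrite even_sg.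
  rewrite (sumN_ext m (fun b => inA (2 ^ j) b *
      sumN m (fun a => if Nat.ltb b a then inA (flip C j) a else 0))%nat
     (fun b => if Nat.eqb b j then
        sumN m (fun a => if Nat.ltb j a then inA (flip C j) a else 0%nat) else 0%nat))
    by (intros b _; rewrite inA_pow2; destruct (Nat.eqb_spec b j); subst; lia).
  rewrite sumN_kron by auto.
  rewrite (sumN_ext m (fun i => inA (flip C j) i * inA (2 ^ j) i)%nat
      (fun i => if Nat.eqb i j then inA (flip C j) i else 0%nat))
    by (intros i _; rewrite inA_pow2; destruct (Nat.eqb i j); lia).
  rewrite sumN_kron by auto.
  unfold sR, grade, lo.
  rewrite (sumN_split m j (fun i => inA C i)), sumN_below by lia.
  rewrite (sumN_ext m (fun a => if Nat.ltb j a then inA (flip C j) a else 0%nat)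
      (fun a => if Nat.ltb j a then inA C a else 0%nat))
    by (intros a _; destruct (Nat.ltb_spec j a); auto; apply inA_flip_other; lia).
  rewrite inA_flip_self.
  set (h := sumN m (fun a => if Nat.ltb j a then inA C a else 0%nat)).
  set (l := sumN j (fun i => inA C i)).
  pose proof (inA_le C j). destruct (inA C j) as [|[|]]; simpl; try lia.
  - apply sg_par with (c := l). lia.
  - apply sg_par with (c := (l + 1)%nat). lia.
Qed.

(** Left and right multiplication by a generator: the coefficients of
    [e_(j+1) u] and of [u e_(j+1)]. *)
Definition eL (j : nat) (u : Cl) : Cl := fun C => sL j C * u (flip C j).
Definition eR (m j : nat) (u : Cl) : Cl := fun C => sR m j C * u (flip C j).

Lemma lxor_pow2_eq j B C : Nat.lxor (2 ^ j) B = C <-> B = flip C j.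
Proof.
  unfold flip. split; [intros <- | intros ->].
  - rewrite (Nat.lxor_comm (2 ^ j) B), Nat.lxor_assoc, Nat.lxor_nilpotent, Nat.lxor_0_r.
    reflexivity.
  - rewrite (Nat.lxor_comm C), <- Nat.lxor_assoc, Nat.lxor_nilpotent, Nat.lxor_0_l. reflexivity.
Qed.

Lemma cl_mul_genl m j u C : (j < m)%nat -> (C < 2 ^ m)%nat -> cl_mul m (gen j) u C = eL j u C.
Proof.
  intros Hj HC. unfold cl_mul.
  rewrite (sumR_ext _ _ (fun A => if Nat.eqb A (2 ^ j) then
     sumR (2 ^ m) (fun B => if Nat.eqb B (flip C j) then sL j C * u B else 0) else 0)).
  2:{ intros A HA. unfold gen. destruct (Nat.eqb_spec A (2 ^ j)) as [->|HAj].
      - apply sumR_ext. intros B HB.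
        destruct (Nat.eqb_spec (Nat.lxor (2 ^ j) B) C) as [E|E];
          destruct (Nat.eqb_spec B (flip C j)) as [E'|E']; rewrite ?Nat.eqb_refl.
        + rewrite E', blade_sign_genl by auto. ring.
        + exfalso. apply E', lxor_pow2_eq, E.
        + exfalso. apply E, lxor_pow2_eq, E'.
        + reflexivity.
      - rewrite (sumR_ext _ _ (fun _ => 0)), sumR_zero by (intros; destruct (Nat.eqb _ _); ring).
        reflexivity. }
  rewrite sumR_kron by (apply pow2_lt; auto).
  rewrite sumR_kron by (apply flip_lt; auto). reflexivity.
Qed.

Lemma cl_mul_genr m j u C : (j < m)%nat -> (C < 2 ^ m)%nat -> cl_mul m u (gen j) C = eR m j u C.
Proof.
  intros Hj HC. unfold cl_mul.
  rewrite (sumR_ext _ _ (fun A => if Nat.eqb A (flip C j) then sR m j C * u A else 0)).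
  2:{ intros A HA. unfold gen.
      rewrite (sumR_ext _ _ (fun B => if Nat.eqb B (2 ^ j) then
          (if Nat.eqb (Nat.lxor A B) C then blade_sign m A B * u A else 0) else 0))
        by (intros B _; destruct (Nat.eqb_spec B (2 ^ j)); destruct (Nat.eqb _ _); ring).
      rewrite sumR_kron by (apply pow2_lt; auto).
      rewrite (Nat.lxor_comm A).
      destruct (Nat.eqb_spec (Nat.lxor (2 ^ j) A) C) as [E|E];
        destruct (Nat.eqb_spec A (flip C j)) as [E'|E'].
      + rewrite E', blade_sign_genr by auto. reflexivity.
      + exfalso. apply E', lxor_pow2_eq, E.
      + exfalso. apply E, lxor_pow2_eq, E'.
      + reflexivity. }
  rewrite sumR_kron by (apply flip_lt; auto). reflexivity.
Qed.

(** [u y] and [y u] for a point [y] of [R^m]. *)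
Definition mulvec (m : nat) (u : Cl) (y : pt) : Cl := fun C => sumR m (fun a => y a * eR m a u C).
Definition vecmul (m : nat) (y : pt) (u : Cl) : Cl := fun C => sumR m (fun a => y a * eL a u C).

Definition cl_scal (c : R) (u : Cl) : Cl := fun C => c * u C.

Lemma cl_sum_ext n g g' : (forall a, (a < n)%nat -> g a = g' a) -> cl_sum n g = cl_sum n g'.
Proof.
  intros H. apply functional_extensionality; intros C. unfold cl_sum.
  apply sumR_ext; intros; rewrite H; auto.
Qed.

Lemma cl_mul_vec_r m u y C : (C < 2 ^ m)%nat -> cl_mul m u (vec m y) C = mulvec m u y C.
Proof.
  intros HC. unfold mulvec. rewrite (sumR_ext m _ (fun a => y a * cl_mul m u (gen a) C))
    by (intros; rewrite cl_mul_genr; auto).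
  unfold vec, cl_mul, cl_sum.
  rewrite (sumR_ext m _ (fun a => sumR (2 ^ m) (fun A => sumR (2 ^ m) (fun B => y a *
     (if Nat.eqb (Nat.lxor A B) C then blade_sign m A B * u A * gen a B else 0)))))
    by (intros; rewrite <- sumR_scal; apply sumR_ext; intros; rewrite <- sumR_scal; reflexivity).
  rewrite (sumR_swap m (2 ^ m)). apply sumR_ext; intros A _.
  rewrite (sumR_swap m (2 ^ m)). apply sumR_ext; intros B _.
  destruct (Nat.eqb _ _).
  - rewrite <- sumR_scal. apply sumR_ext; intros; ring.
  - rewrite (sumR_ext _ _ (fun _ => 0)), sumR_zero by (intros; ring). reflexivity.
Qed.

Lemma cl_mul_vec_l m u y C : (C < 2 ^ m)%nat -> cl_mul m (vec m y) u C = vecmul m y u C.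
Proof.
  intros HC. unfold vecmul. rewrite (sumR_ext m _ (fun a => y a * cl_mul m (gen a) u C))
    by (intros; rewrite cl_mul_genl; auto).
  unfold vec, cl_mul, cl_sum.
  rewrite (sumR_ext m _ (fun a => sumR (2 ^ m) (fun A => sumR (2 ^ m) (fun B => y a *
     (if Nat.eqb (Nat.lxor A B) C then blade_sign m A B * gen a A * u B else 0)))))
    by (intros; rewrite <- sumR_scal; apply sumR_ext; intros; rewrite <- sumR_scal; reflexivity).
  rewrite (sumR_swap m (2 ^ m)). apply sumR_ext; intros A _.
  rewrite (sumR_swap m (2 ^ m)). apply sumR_ext; intros B _.
  destruct (Nat.eqb _ _).
  - rewrite (sumR_ext m (fun a => y a * (blade_sign m A B * gen a A * u B))
        (fun a => (blade_sign m A B * u B) * (y a * gen a A))) by (intros; ring).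
    rewrite sumR_scal. ring.
  - rewrite (sumR_ext _ _ (fun _ => 0)), sumR_zero by (intros; ring). reflexivity.
Qed.

Lemma eL_anticomm i j u C :
  eL i (eL j u) C + eL j (eL i u) C = if Nat.eqb i j then -2 * u C else 0.
Proof.
  unfold eL. destruct (Nat.eqb_spec i j) as [->|Hij].
  - rewrite flip_flip, sL_flip_self.
    replace (-2 * u C) with (-2 * (sL j C * sL j C) * u C) by (unfold sL; rewrite sg_sq; ring).
    ring.
  - rewrite (flip_comm C j i), sL_flip_other, (sL_flip_other C j i), (eps_swap i j) by auto. ring.
Qed.

Lemma eR_anticomm m i j u C : (i < m)%nat -> (j < m)%nat ->
  eR m i (eR m j u) C + eR m j (eR m i u) C = if Nat.eqb i j then -2 * u C else 0.
Proof.
  intros Hi Hj. unfold eR. destruct (Nat.eqb_spec i j) as [->|Hij].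
  - rewrite flip_flip, sR_flip_self by auto.
    replace (-2 * u C) with (-2 * (sR m j C * sR m j C) * u C) by (unfold sR; rewrite sg_sq; ring).
    ring.
  - rewrite (flip_comm C j i), (sR_flip_other m C i j), (sR_flip_other m C j i), (eps_swap i j)
      by auto. ring.
Qed.

Lemma eL_eR_comm m i j u : (i < m)%nat -> (j < m)%nat -> eL i (eR m j u) = eR m j (eL i u).
Proof.
  intros Hi Hj. apply functional_extensionality; intros C. unfold eL, eR.
  rewrite flip_comm. destruct (Nat.eq_dec i j) as [->|Hij].
  - rewrite sL_flip_self, sR_flip_self by auto. ring.
  - rewrite sR_flip_other, sL_flip_other, (eps_swap i j) by auto. ring.
Qed.

Lemma eL_sum i n g C : eL i (fun D => sumR n (fun a => g a D)) C = sumR n (fun a => eL i (g a) C).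
Proof. unfold eL. rewrite <- sumR_scal. reflexivity. Qed.

Lemma eR_sum m i n g C :
  eR m i (fun D => sumR n (fun a => g a D)) C = sumR n (fun a => eR m i (g a) C).
Proof. unfold eR. rewrite <- sumR_scal. reflexivity. Qed.

Definition symmetric (m : nat) (S : nat -> nat -> Cl) : Prop :=
  forall i j, (i < m)%nat -> (j < m)%nat -> S i j = S j i.

Lemma eL_symmetric_sum m S C : symmetric m S ->
  sumR m (fun i => sumR m (fun j => eL i (eL j (S i j)) C)) = - sumR m (fun i => S i i C).
Proof.
  intros HS. rewrite <- sumR_opp, <- (sumR_diag m (fun i => - S i i C)).
  apply sumR_symmetrize. intros i j Hi Hj.
  rewrite (HS j i), eL_anticomm by auto. rewrite (Nat.eqb_sym j i).
  destruct (Nat.eqb_spec i j) as [->|]; ring.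
Qed.

Lemma eR_symmetric_sum m S C : symmetric m S ->
  sumR m (fun i => sumR m (fun j => eR m i (eR m j (S i j)) C)) = - sumR m (fun i => S i i C).
Proof.
  intros HS. rewrite <- sumR_opp, <- (sumR_diag m (fun i => - S i i C)).
  apply sumR_symmetrize. intros i j Hi Hj.
  rewrite (HS j i), eR_anticomm by auto. rewrite (Nat.eqb_sym j i).
  destruct (Nat.eqb_spec i j) as [->|]; ring.
Qed.

(** The grade operator [u |-> sum_j e_j u e_j]; it multiplies a
    [k]-vector by [grade_const m k]. *)
Definition grade_op (m : nat) (u : Cl) : Cl := fun C => sumR m (fun j => eL j (eR m j u) C).
Definition grade_const (m k : nat) : R := sg k * (2 * INR k - INR m).

Lemma grade_op_spec m u C : grade_op m u C = grade_const m (grade m C) * u C.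
Proof.
  unfold grade_op, eL, eR, grade_const.
  rewrite (sumR_ext m _ (fun j => (- sg (grade m C) * u C) * (1 - 2 * INR (inA C j)))).
  2:{ intros j Hj. rewrite flip_flip, sR_flip_self, sR_sL, sg_add, (sg_bit (inA C j))
        by (auto; apply inA_le).
      destruct (sg_pm (lo j C + 1 + inA C j)) as [E|E]; unfold sL; rewrite E; ring. }
  rewrite (sumR_ext m _ (fun j => (- sg (grade m C) * u C) * 1
      + (- sg (grade m C) * u C) * (-2) * INR (inA C j))) by (intros; ring).
  rewrite sumR_add, !sumR_scal, sumR_const1. unfold grade. rewrite INR_sumN. ring.
Qed.

Lemma grade_op_kvector m k u : (forall C, grade m C <> k -> u C = 0) ->
  grade_op m u = cl_scal (grade_const m k) u.
Proof.
  intros H. apply functional_extensionality; intros C. rewrite grade_op_spec. unfold cl_scal.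
  destruct (Nat.eq_dec (grade m C) k) as [->|Hk]; [reflexivity|]. rewrite H; auto. ring.
Qed.

Lemma grade_const_neq0 m k : (2 * k <> m)%nat -> grade_const m k <> 0.
Proof.
  intros H. unfold grade_const. apply Rmult_integral_contrapositive. split.
  - destruct (sg_pm k) as [-> | ->]; lra.
  - intros E. apply H. apply INR_eq. rewrite mult_INR. simpl. lra.
Qed.

Lemma grade_op_eL m i u C : (i < m)%nat ->
  grade_op m (eL i u) C + eL i (grade_op m u) C = -2 * eR m i u C.
Proof.
  intros Hi. unfold grade_op. rewrite eL_sum, <- sumR_add.
  rewrite (sumR_ext m _ (fun j => if Nat.eqb j i then -2 * eR m j u C else 0)).
  - apply sumR_kron; auto.
  - intros j Hj. rewrite <- eL_eR_comm by auto. apply eL_anticomm.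
Qed.

Lemma grade_op_eR m i u C : (i < m)%nat ->
  grade_op m (eR m i u) C + eR m i (grade_op m u) C = -2 * eL i u C.
Proof.
  intros Hi. unfold grade_op. rewrite eR_sum, <- sumR_add.
  rewrite (sumR_ext m _ (fun j => if Nat.eqb j i then -2 * eL j u C else 0)).
  - apply sumR_kron; auto.
  - intros j Hj. rewrite !eL_eR_comm by auto. apply eR_anticomm; auto.
Qed.

Lemma eL_add i u v : eL i (cl_add u v) = cl_add (eL i u) (eL i v).
Proof. apply functional_extensionality; intros C. unfold eL, cl_add. ring. Qed.

Lemma eR_add m i u v : eR m i (cl_add u v) = cl_add (eR m i u) (eR m i v).
Proof. apply functional_extensionality; intros C. unfold eR, cl_add. ring. Qed.

Lemma grade_op_sum m n g C :
  grade_op m (fun D => sumR n (fun a => g a D)) C = sumR n (fun a => grade_op m (g a) C).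
Proof.
  unfold grade_op. rewrite <- sumR_swap. apply sumR_ext; intros j _.
  unfold eL, eR. rewrite <- !sumR_scal. apply sumR_ext; intros; ring.
Qed.

Lemma mulvec_sum m n g y C :
  mulvec m (fun D => sumR n (fun a => g a D)) y C = sumR n (fun a => mulvec m (g a) y C).
Proof.
  unfold mulvec. rewrite <- sumR_swap. apply sumR_ext; intros a _.
  unfold eR. rewrite <- !sumR_scal. apply sumR_ext; intros; ring.
Qed.

Lemma vecmul_sum m n g y C :
  vecmul m y (fun D => sumR n (fun a => g a D)) C = sumR n (fun a => vecmul m y (g a) C).
Proof.
  unfold vecmul. rewrite <- sumR_swap. apply sumR_ext; intros a _.
  unfold eL. rewrite <- !sumR_scal. apply sumR_ext; intros; ring.
Qed.

Lemma mulvec_add m u v y : mulvec m (cl_add u v) y = cl_add (mulvec m u y) (mulvec m v y).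
Proof.
  apply functional_extensionality; intros C. unfold mulvec, cl_add, eR.
  rewrite <- sumR_add. apply sumR_ext; intros; ring.
Qed.

Lemma mulvec_scal m c u y : mulvec m (cl_scal c u) y = cl_scal c (mulvec m u y).
Proof.
  apply functional_extensionality; intros C. unfold mulvec, cl_scal, eR.
  rewrite <- sumR_scal. apply sumR_ext; intros; ring.
Qed.

Lemma vecmul_scal m c u y : vecmul m y (cl_scal c u) = cl_scal c (vecmul m y u).
Proof.
  apply functional_extensionality; intros C. unfold vecmul, cl_scal, eL.
  rewrite <- sumR_scal. apply sumR_ext; intros; ring.
Qed.

Lemma eL_mulvec m j u y : (j < m)%nat -> eL j (mulvec m u y) = mulvec m (eL j u) y.
Proof.
  intros Hj. apply functional_extensionality; intros C. unfold mulvec.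
  rewrite eL_sum. apply sumR_ext; intros a Ha.
  rewrite <- eL_eR_comm by auto. unfold eL. ring.
Qed.

Lemma eR_vecmul m j u y : (j < m)%nat -> eR m j (vecmul m y u) = vecmul m y (eR m j u).
Proof.
  intros Hj. apply functional_extensionality; intros C. unfold vecmul.
  rewrite eR_sum. apply sumR_ext; intros a Ha.
  rewrite eL_eR_comm by auto. unfold eR. ring.
Qed.

Lemma mulvec_below m u y C : (forall D, (D < 2 ^ m)%nat -> u D = 0) -> (C < 2 ^ m)%nat ->
  mulvec m u y C = 0.
Proof.
  intros H HC. unfold mulvec, eR. rewrite (sumR_ext _ _ (fun _ => 0)), sumR_zero; auto.
  intros a Ha. rewrite H by (apply flip_lt; auto). ring.
Qed.

Lemma vecmul_below m u y C : (forall D, (D < 2 ^ m)%nat -> u D = 0) -> (C < 2 ^ m)%nat ->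
  vecmul m y u C = 0.
Proof.
  intros H HC. unfold vecmul, eL. rewrite (sumR_ext _ _ (fun _ => 0)), sumR_zero; auto.
  intros a Ha. rewrite H by (apply flip_lt; auto). ring.
Qed.

Definition has_pd (j : nat) (f : pt -> R) (x : pt) : Prop :=
  derivable_pt_lim (fun t => f (shift x j t)) 0 (pd j f x).

Lemma pd_spec j f x l : derivable_pt_lim (fun t => f (shift x j t)) 0 l -> pd j f x = l.
Proof.
  intros H. unfold pd.
  pose proof (epsilon_spec (inhabits 0)
    (fun l => derivable_pt_lim (fun t => f (shift x j t)) 0 l) (ex_intro _ l H)) as H'.
  eapply uniqueness_limite; eauto.
Qed.

Lemma has_pd_intro j f x l : derivable_pt_lim (fun t => f (shift x j t)) 0 l -> has_pd j f x.
Proof. intros H. unfold has_pd. rewrite (pd_spec j f x l H). exact H. Qed.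

Lemma shift0 x j : shift x j 0 = x.
Proof. apply functional_extensionality; intros i. unfold shift. destruct (Nat.eqb i j); ring. Qed.

Lemma shift_shift x j a b : shift (shift x j a) j b = shift x j (a + b).
Proof. apply functional_extensionality; intros i. unfold shift. destruct (Nat.eqb i j); ring. Qed.

Lemma shift_comm x i j a b : i <> j -> shift (shift x i a) j b = shift (shift x j b) i a.
Proof.
  intros H. apply functional_extensionality; intros l. unfold shift.
  destruct (Nat.eqb_spec l i), (Nat.eqb_spec l j); subst; try lia; ring.
Qed.

Lemma open_in_Rm m Om x : open_Rm m Om -> Om x -> in_Rm m x.
Proof. intros [H _] Hx. exact (H x Hx). Qed.

Lemma open_shift m Om x j : open_Rm m Om -> Om x -> (j < m)%nat ->
  exists e, 0 < e /\ forall t, Rabs t < e -> Om (shift x j t).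
Proof.
  intros [H1 H2] Hx Hj. destruct (H2 x Hx) as [e [He H]]. exists e; split; auto.
  intros t Ht. apply H.
  - intros i Hi. unfold shift. destruct (Nat.eqb_spec i j); [lia|]. apply (H1 x Hx); auto.
  - intros i Hi. unfold shift. destruct (Nat.eqb i j).
    + replace (x i + t - x i) with t by ring. auto.
    + replace (x i - x i) with 0 by ring. rewrite Rabs_R0; auto.
Qed.

Lemma derivable_local (f g : R -> R) e l : 0 < e -> (forall t, Rabs t < e -> f t = g t) ->
  derivable_pt_lim f 0 l -> derivable_pt_lim g 0 l.
Proof.
  intros He Hfg Hf eps Heps. destruct (Hf eps Heps) as [d Hd].
  assert (Hd' : 0 < Rmin d e) by (apply Rmin_pos; [apply cond_pos | auto]).
  exists (mkposreal _ Hd'). intros h Hh Hlt. simpl in Hlt.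
  rewrite <- !Hfg.
  - apply Hd; auto. apply Rlt_le_trans with (1 := Hlt); apply Rmin_l.
  - rewrite Rabs_R0; auto.
  - rewrite Rplus_0_l. apply Rlt_le_trans with (1 := Hlt); apply Rmin_r.
Qed.

Lemma pd_on m Om j f g x : open_Rm m Om -> Om x -> (j < m)%nat ->
  (forall y, Om y -> f y = g y) -> pd j f x = pd j g x /\ (has_pd j f x -> has_pd j g x).
Proof.
  intros HO Hx Hj H. destruct (open_shift m Om x j HO Hx Hj) as [e [He He']].
  assert (E : pd j f x = pd j g x).
  { unfold pd. f_equal. apply functional_extensionality; intros l.
    apply propositional_extensionality.
    split; intros D.
    - apply (derivable_local (fun t => f (shift x j t))) with e; auto.
    - apply (derivable_local (fun t => g (shift x j t))) with e; auto.
      intros t Ht; symmetry; apply H, He', Ht. }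
  split; auto. unfold has_pd. rewrite <- E. intros D.
  apply (derivable_local (fun t => f (shift x j t))) with e; auto.
Qed.

Lemma pd_const j c x : pd j (fun _ => c) x = 0 /\ has_pd j (fun _ => c) x.
Proof.
  assert (E : pd j (fun _ => c) x = 0) by (apply pd_spec, (derivable_pt_lim_const c 0)).
  split; auto. unfold has_pd. rewrite E. apply (derivable_pt_lim_const c 0).
Qed.

Lemma pd_plus j f g x : has_pd j f x -> has_pd j g x ->
  pd j (fun y => f y + g y) x = pd j f x + pd j g x /\ has_pd j (fun y => f y + g y) x.
Proof.
  intros Hf Hg. pose proof (derivable_pt_lim_plus _ _ _ _ _ Hf Hg) as H.
  split; [apply pd_spec, H | apply (has_pd_intro _ _ _ _ H)].
Qed.

Lemma pd_scal j c f x : has_pd j f x ->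
  pd j (fun y => c * f y) x = c * pd j f x /\ has_pd j (fun y => c * f y) x.
Proof.
  intros Hf. pose proof (derivable_pt_lim_scal _ c _ _ Hf) as H.
  split; [apply pd_spec, H | apply (has_pd_intro _ _ _ _ H)].
Qed.

Lemma pd_coord j a f x : has_pd j f x ->
  pd j (fun y => y a * f y) x = (if Nat.eqb a j then f x else 0) + x a * pd j f x /\
  has_pd j (fun y => y a * f y) x.
Proof.
  intros Hf.
  assert (Hc : derivable_pt_lim (fun t => shift x j t a) 0 (if Nat.eqb a j then 1 else 0)).
  { unfold shift. destruct (Nat.eqb a j).
    - replace 1 with (0 + 1) by ring. apply derivable_pt_lim_plus.
      + apply (derivable_pt_lim_const (x a)).
      + apply derivable_pt_lim_id.
    - apply (derivable_pt_lim_const (x a)). }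
  pose proof (derivable_pt_lim_mult _ _ _ _ _ Hc Hf) as H.
  cbv beta in H. rewrite shift0 in H.
  replace ((if Nat.eqb a j then 1 else 0) * f x + x a * pd j f x)
    with ((if Nat.eqb a j then f x else 0) + x a * pd j f x) in H by (destruct (Nat.eqb a j); ring).
  split; [apply pd_spec, H | apply (has_pd_intro _ _ _ _ H)].
Qed.

Lemma pd_sum j N f x : (forall a, (a < N)%nat -> has_pd j (f a) x) ->
  pd j (fun y => sumR N (fun a => f a y)) x = sumR N (fun a => pd j (f a) x) /\
  has_pd j (fun y => sumR N (fun a => f a y)) x.
Proof.
  induction N as [|N IH]; intros H; simpl; [apply pd_const|].
  destruct IH as [E D]; [intros; apply H; lia|].
  destruct (pd_plus j (fun y => sumR N (fun a => f a y)) (f N) x D (H N ltac:(lia))) as [E' D'].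
  split; auto. rewrite E', E. reflexivity.
Qed.

Lemma cont_on_local m Om f g : open_Rm m Om -> cont_on m Om f ->
  (forall y, Om y -> f y = g y) -> cont_on m Om g.
Proof.
  intros HO Hf E x Hx eps Heps.
  destruct (Hf x Hx eps Heps) as [d [Hd H]]. destruct (proj2 HO x Hx) as [e [He Ho]].
  exists (Rmin d e). split; [apply Rmin_pos; auto|]. intros y Hy Hyx.
  rewrite <- (E y), <- (E x); auto.
  - apply H; auto. intros j Hj. apply Rlt_le_trans with (1 := Hyx j Hj), Rmin_l.
  - apply Ho; auto. intros j Hj. apply Rlt_le_trans with (1 := Hyx j Hj), Rmin_r.
Qed.

Lemma cont_on_const m Om c : cont_on m Om (fun _ => c).
Proof.
  intros x _ e He. exists 1. split; [lra|]. intros.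
  replace (c - c) with 0 by ring. rewrite Rabs_R0; auto.
Qed.

Lemma cont_on_plus m Om f g : cont_on m Om f -> cont_on m Om g ->
  cont_on m Om (fun y => f y + g y).
Proof.
  intros Hf Hg x Hx e He.
  destruct (Hf x Hx (e / 2)) as [d1 [Hd1 H1]]; [lra|].
  destruct (Hg x Hx (e / 2)) as [d2 [Hd2 H2]]; [lra|].
  exists (Rmin d1 d2). split; [apply Rmin_pos; auto|]. intros y Hy Hyx.
  assert (A1 : Rabs (f y - f x) < e / 2)
    by (apply H1; auto; intros j Hj; apply Rlt_le_trans with (1 := Hyx j Hj), Rmin_l).
  assert (A2 : Rabs (g y - g x) < e / 2)
    by (apply H2; auto; intros j Hj; apply Rlt_le_trans with (1 := Hyx j Hj), Rmin_r).
  replace (f y + g y - (f x + g x)) with ((f y - f x) + (g y - g x)) by ring.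
  pose proof (Rabs_triang (f y - f x) (g y - g x)). lra.
Qed.

Lemma cont_on_scal m Om c f : cont_on m Om f -> cont_on m Om (fun y => c * f y).
Proof.
  intros Hf x Hx e He.
  assert (Hc : 0 < Rabs c + 1) by (pose proof (Rabs_pos c); lra).
  destruct (Hf x Hx (e / (Rabs c + 1))) as [d [Hd H]]; [apply Rdiv_lt_0_compat; auto|].
  exists d. split; auto. intros y Hy Hyx.
  replace (c * f y - c * f x) with (c * (f y - f x)) by ring. rewrite Rabs_mult.
  specialize (H y Hy Hyx).
  assert (E : (Rabs c + 1) * (e / (Rabs c + 1)) = e) by (field; lra).
  pose proof (Rabs_pos c). pose proof (Rabs_pos (f y - f x)). nra.
Qed.

Lemma cont_on_coord m Om a f : open_Rm m Om -> cont_on m Om f ->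
  cont_on m Om (fun y => y a * f y).
Proof.
  intros HO Hf x Hx e He.
  destruct (Nat.lt_ge_cases a m) as [Ha|Ha].
  2:{ exists 1. split; [lra|]. intros y Hy _.
      rewrite (Hy a Ha), (open_in_Rm m Om x HO Hx a Ha).
      replace (0 * f y - 0 * f x) with 0 by ring. rewrite Rabs_R0; auto. }
  set (M := Rabs (f x) + 1). set (X := Rabs (x a) + 1).
  assert (HM : 0 < M) by (unfold M; pose proof (Rabs_pos (f x)); lra).
  assert (HX : 0 < X) by (unfold X; pose proof (Rabs_pos (x a)); lra).
  assert (He2 : 0 < e / (2 * X)) by (apply Rdiv_lt_0_compat; lra).
  destruct (Hf x Hx (Rmin 1 (e / (2 * X)))) as [d [Hd H]]; [apply Rmin_pos; lra|].
  exists (Rmin d (e / (2 * M))). split; [apply Rmin_pos; [|apply Rdiv_lt_0_compat]; lra|].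
  intros y Hy Hyx.
  assert (Hfy : Rabs (f y - f x) < Rmin 1 (e / (2 * X)))
    by (apply H; auto; intros j Hj; apply Rlt_le_trans with (1 := Hyx j Hj), Rmin_l).
  assert (Hya : Rabs (y a - x a) < e / (2 * M))
    by (apply Rlt_le_trans with (1 := Hyx a Ha), Rmin_r).
  pose proof (Rmin_l 1 (e / (2 * X))). pose proof (Rmin_r 1 (e / (2 * X))).
  assert (Bfy : Rabs (f y) < M).
  { unfold M. replace (f y) with (f x + (f y - f x)) by ring.
    pose proof (Rabs_triang (f x) (f y - f x)). lra. }
  replace (y a * f y - x a * f x) with ((y a - x a) * f y + x a * (f y - f x)) by ring.
  eapply Rle_lt_trans; [apply Rabs_triang|]. rewrite !Rabs_mult.
  assert (EM : e / (2 * M) * M = e / 2) by (field; lra).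
  assert (EX : e / (2 * X) * X = e / 2) by (field; lra).
  assert (BX : Rabs (x a) < X) by (unfold X; lra).
  pose proof (Rabs_pos (y a - x a)). pose proof (Rabs_pos (f y)).
  pose proof (Rabs_pos (x a)). pose proof (Rabs_pos (f y - f x)).
  nra.
Qed.

Lemma Ck_cont m n Om f : Ck m n Om f -> cont_on m Om f.
Proof. destruct n; intros [H _]; exact H. Qed.

Lemma Ck_has_pd m n Om f j x : Ck m (S n) Om f -> (j < m)%nat -> Om x -> has_pd j f x.
Proof. intros [_ H] Hj Hx. apply (H j Hj); auto. Qed.

Lemma Ck_pd m n Om f j : Ck m (S n) Om f -> (j < m)%nat -> Ck m n Om (pd j f).
Proof. intros [_ H] Hj. apply (H j Hj). Qed.

Lemma Ck_le m n p Om f : (n <= p)%nat -> Ck m p Om f -> Ck m n Om f.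
Proof.
  revert p f; induction n as [|n IH]; intros p f Hnp Hf.
  - split; [exact (Ck_cont m p Om f Hf) | exact I].
  - destruct p as [|p]; [lia|]. destruct Hf as [Hc H]. split; auto.
    intros j Hj. destruct (H j Hj) as [H1 H2]. split; auto. apply (IH p); auto. lia.
Qed.

Lemma Ck_local m n Om f g : open_Rm m Om -> Ck m n Om f ->
  (forall y, Om y -> f y = g y) -> Ck m n Om g.
Proof.
  intros HO. revert f g; induction n as [|n IH]; intros f g Hf E.
  - split; [apply cont_on_local with f; auto; apply (Ck_cont _ _ _ _ Hf) | exact I].
  - split; [apply cont_on_local with f; auto; apply (Ck_cont _ _ _ _ Hf)|].
    intros j Hj. split.
    + intros x Hx. apply (proj2 (pd_on m Om j f g x HO Hx Hj E)).
      apply (Ck_has_pd m n Om f j x Hf Hj Hx).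
    + apply IH with (pd j f); [apply (Ck_pd m n Om f j Hf Hj)|].
      intros y Hy. apply (proj1 (pd_on m Om j f g y HO Hy Hj E)).
Qed.

Lemma Ck_const m n Om c : Ck m n Om (fun _ => c).
Proof.
  revert c; induction n as [|n IH]; intros c; split; try exact I; try apply cont_on_const.
  intros j Hj. split.
  - intros x _. apply pd_const.
  - replace (pd j (fun _ : pt => c)) with (fun _ : pt => 0); [apply IH|].
    apply functional_extensionality; intros x. symmetry; apply pd_const.
Qed.

Lemma Ck_plus m n Om f g : open_Rm m Om -> Ck m n Om f -> Ck m n Om g ->
  Ck m n Om (fun y => f y + g y).
Proof.
  intros HO. revert f g; induction n as [|n IH]; intros f g Hf Hg;
    (split; [apply cont_on_plus; eapply Ck_cont; eauto|]); [exact I|].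
  intros j Hj.
  assert (D : forall x, Om x -> has_pd j f x /\ has_pd j g x)
    by (intros; split; eapply Ck_has_pd; eauto).
  split.
  - intros x Hx. apply pd_plus; apply D; auto.
  - apply Ck_local with (fun y => pd j f y + pd j g y); auto.
    + apply IH; eapply Ck_pd; eauto.
    + intros y Hy. symmetry. apply pd_plus; apply D; auto.
Qed.

Lemma Ck_scal m n Om c f : open_Rm m Om -> Ck m n Om f -> Ck m n Om (fun y => c * f y).
Proof.
  intros HO. revert f; induction n as [|n IH]; intros f Hf;
    (split; [apply cont_on_scal; eapply Ck_cont; eauto|]); [exact I|].
  intros j Hj. split.
  - intros x Hx. apply pd_scal. eapply Ck_has_pd; eauto.
  - apply Ck_local with (fun y => c * pd j f y); auto.
    + apply IH; eapply Ck_pd; eauto.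
    + intros y Hy. symmetry. apply pd_scal. eapply Ck_has_pd; eauto.
Qed.

Lemma Ck_sum m n Om N f : open_Rm m Om -> (forall a, (a < N)%nat -> Ck m n Om (f a)) ->
  Ck m n Om (fun y => sumR N (fun a => f a y)).
Proof.
  intros HO. induction N as [|N IH]; intros H; simpl.
  - apply Ck_const.
  - apply (Ck_plus m n Om (fun y => sumR N (fun a => f a y)) (f N)); auto.
Qed.

Lemma Ck_coord m n Om a f : open_Rm m Om -> Ck m n Om f -> Ck m n Om (fun y => y a * f y).
Proof.
  intros HO. revert f; induction n as [|n IH]; intros f Hf;
    (split; [apply cont_on_coord; auto; eapply Ck_cont; eauto|]); [exact I|].
  intros j Hj. split.
  - intros x Hx. apply pd_coord. eapply Ck_has_pd; eauto.
  - apply Ck_local with (fun y => (if Nat.eqb a j then f y else 0) + y a * pd j f y); auto.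
    + apply Ck_plus; auto.
      * destruct (Nat.eqb a j); [apply (Ck_le m n (S n)); auto | apply Ck_const].
      * apply IH; eapply Ck_pd; eauto.
    + intros y Hy. symmetry. apply pd_coord. eapply Ck_has_pd; eauto.
Qed.

(** Proof via the double difference
    [f(x+h e_i+h e_j) - f(x+h e_i) - f(x+h e_j) + f(x)], which the mean value
    theorem expresses as [h^2] times either mixed derivative at some point
    of the square of side [h]. *)

Lemma deriv_translate (G : R -> R) t0 l :
  derivable_pt_lim (fun u => G (t0 + u)) 0 l -> derivable_pt_lim G t0 l.
Proof.
  intros H eps Heps. destruct (H eps Heps) as [d Hd]. exists d. intros h Hh Hlt.
  specialize (Hd h Hh Hlt). rewrite Rplus_0_l, Rplus_0_r in Hd. exact Hd.
Qed.

Section Schwarz.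
Variables (m : nat) (Om : pt -> Prop) (f : pt -> R) (x : pt).
Hypotheses (HO : open_Rm m Om) (Hf : Ck m 2 Om f) (Hx : Om x).

Definition corner (i j : nat) (s t : R) : pt := shift (shift x i s) j t.

Definition double_diff (i j : nat) (h : R) : R :=
  f (corner i j h h) - f (corner i j h 0) - f (corner i j 0 h) + f (corner i j 0 0).

Lemma corner_swap i j s t : i <> j -> corner j i t s = corner i j s t.
Proof. intros H. unfold corner. apply shift_comm; auto. Qed.

Lemma double_diff_swap i j h : i <> j -> double_diff j i h = double_diff i j h.
Proof. intros H. unfold double_diff. rewrite !(corner_swap i j) by auto. ring. Qed.

Section Corner.
Variables (i j : nat).
Hypotheses (Hi : (i < m)%nat) (Hj : (j < m)%nat) (Hij : i <> j).

Lemma corner_in_Rm s t : in_Rm m (corner i j s t).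
Proof.
  intros l Hl. unfold corner, shift.
  destruct (Nat.eqb_spec l j); [lia|]. destruct (Nat.eqb_spec l i); [lia|].
  apply (open_in_Rm m Om x HO Hx); auto.
Qed.

Lemma corner_near s t l : (l < m)%nat -> Rabs (corner i j s t l - x l) <= Rmax (Rabs s) (Rabs t).
Proof.
  intros Hl. unfold corner, shift.
  destruct (Nat.eqb_spec l j), (Nat.eqb_spec l i); subst; try lia.
  - replace (x j + t - x j) with t by ring. apply Rmax_r.
  - replace (x i + s - x i) with s by ring. apply Rmax_l.
  - replace (x l - x l) with 0 by ring. rewrite Rabs_R0.
    apply Rle_trans with (Rabs s); [apply Rabs_pos | apply Rmax_l].
Qed.

Lemma corner_close s t r : Rabs s < r -> Rabs t < r ->
  forall l, (l < m)%nat -> Rabs (corner i j s t l - x l) < r.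
Proof.
  intros Hs Ht l Hl. eapply Rle_lt_trans; [apply corner_near; auto|]. apply Rmax_lub_lt; auto.
Qed.

Lemma corner_square :
  exists e, 0 < e /\ forall s t, Rabs s < e -> Rabs t < e -> Om (corner i j s t).
Proof.
  destruct (proj2 HO x Hx) as [e [He H]]. exists e; split; auto.
  intros s t Hs Ht. apply H; [apply corner_in_Rm | apply corner_close; auto].
Qed.

Lemma corner_deriv_s g s0 t : (forall y, Om y -> has_pd i g y) -> Om (corner i j s0 t) ->
  derivable_pt_lim (fun s => g (corner i j s t)) s0 (pd i g (corner i j s0 t)).
Proof.
  intros Hg Hc. apply deriv_translate.
  replace (fun u => g (corner i j (s0 + u) t)) with (fun u => g (shift (corner i j s0 t) i u));
    [apply Hg; auto|].
  apply functional_extensionality; intros u. f_equal. unfold corner.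
  rewrite !(shift_comm _ i j) by auto. apply shift_shift.
Qed.

Lemma corner_deriv_t g s t0 : (forall y, Om y -> has_pd j g y) -> Om (corner i j s t0) ->
  derivable_pt_lim (fun t => g (corner i j s t)) t0 (pd j g (corner i j s t0)).
Proof.
  intros Hg Hc. apply deriv_translate.
  replace (fun u => g (corner i j s (t0 + u))) with (fun u => g (shift (corner i j s t0) j u));
    [apply Hg; auto|].
  apply functional_extensionality; intros u. unfold corner. rewrite shift_shift. reflexivity.
Qed.

Lemma double_diff_mvt h : 0 < h ->
  (forall s t, 0 <= s <= h -> 0 <= t <= h -> Om (corner i j s t)) ->
  exists s t, 0 < s < h /\ 0 < t < h /\ double_diff i j h = h * h * pd j (pd i f) (corner i j s t).
Proof.
  intros Hh Hin.
  assert (Dfi : forall y, Om y -> has_pd i f y) by (intros; eapply Ck_has_pd; eauto).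
  assert (Dfij : forall y, Om y -> has_pd j (pd i f) y)
    by (intros; eapply Ck_has_pd; [eapply Ck_pd; eauto | auto | auto]).
  destruct (MVT_cor2 (fun s => f (corner i j s h) - f (corner i j s 0))
      (fun s => pd i f (corner i j s h) - pd i f (corner i j s 0)) 0 h Hh) as [s1 [E1 Hs1]].
  { intros c Hc. apply derivable_pt_lim_minus; apply corner_deriv_s; auto; apply Hin; lra. }
  destruct (MVT_cor2 (fun t => pd i f (corner i j s1 t)) (fun t => pd j (pd i f) (corner i j s1 t))
      0 h Hh) as [t1 [E2 Ht1]].
  { intros c Hc. apply corner_deriv_t; auto. apply Hin; lra. }
  exists s1, t1. split; auto. split; auto. unfold double_diff.
  replace (f (corner i j h h) - f (corner i j h 0) - f (corner i j 0 h) + f (corner i j 0 0))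
    with ((f (corner i j h h) - f (corner i j h 0)) - (f (corner i j 0 h) - f (corner i j 0 0)))
    by ring.
  rewrite E1, E2. ring.
Qed.

End Corner.

Lemma eq_of_close a b : (forall e, 0 < e -> Rabs (a - b) < 2 * e) -> a = b.
Proof.
  intros H. destruct (Req_dec (a - b) 0) as [E|E]; [lra|].
  assert (P : 0 < Rabs (a - b) / 4) by (apply Rdiv_lt_0_compat; [apply Rabs_pos_lt; auto | lra]).
  specialize (H _ P). lra.
Qed.

Lemma schwarz i j : (i < m)%nat -> (j < m)%nat -> pd i (pd j f) x = pd j (pd i f) x.
Proof.
  intros Hi Hj. destruct (Nat.eq_dec i j) as [->|Hij]; [reflexivity|].
  assert (Second : forall a b, (a < m)%nat -> (b < m)%nat -> cont_on m Om (pd b (pd a f))).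
  { intros a b Ha Hb. apply (Ck_cont m 0), (Ck_pd m 0); auto. apply (Ck_pd m 1); auto. }
  pose proof (Second i j Hi Hj) as Cij. pose proof (Second j i Hj Hi) as Cji.
  destruct (corner_square i j Hi Hj Hij) as [e [He Hsq]].
  apply eq_of_close. intros eps Heps.
  destruct (Cij x Hx eps Heps) as [d1 [Hd1 C1]].
  destruct (Cji x Hx eps Heps) as [d2 [Hd2 C2]].
  set (h := Rmin e (Rmin d1 d2) / 2).
  pose proof (Rmin_l e (Rmin d1 d2)). pose proof (Rmin_r e (Rmin d1 d2)).
  pose proof (Rmin_l d1 d2). pose proof (Rmin_r d1 d2).
  assert (Hh : 0 < h) by (unfold h; apply Rdiv_lt_0_compat; [repeat apply Rmin_pos|]; lra).
  assert (Hhe : h < e) by (unfold h; lra).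
  assert (Hhd1 : h < d1) by (unfold h; lra).
  assert (Hhd2 : h < d2) by (unfold h; lra).
  assert (Abs : forall s, 0 <= s <= h -> Rabs s = s) by (intros; apply Rabs_right; lra).
  destruct (double_diff_mvt i j Hi Hj Hij h Hh) as [s1 [t1 [Hs1 [Ht1 E1]]]].
  { intros s t Hs Ht. apply Hsq; rewrite Abs; lra. }
  destruct (double_diff_mvt j i Hj Hi (not_eq_sym Hij) h Hh) as [t2 [s2 [Ht2 [Hs2 E2]]]].
  { intros t s Ht Hs. rewrite corner_swap by auto. apply Hsq; rewrite Abs; lra. }
  rewrite double_diff_swap, corner_swap in E2 by auto.
  assert (E : pd j (pd i f) (corner i j s1 t1) = pd i (pd j f) (corner i j s2 t2)).
  { apply Rmult_eq_reg_l with (h * h); [congruence | apply Rgt_not_eq; nra]. }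
  assert (K1 : Rabs (pd j (pd i f) (corner i j s1 t1) - pd j (pd i f) x) < eps).
  { apply C1; [apply corner_in_Rm | apply corner_close]; auto; rewrite Abs; lra. }
  assert (K2 : Rabs (pd i (pd j f) (corner i j s2 t2) - pd i (pd j f) x) < eps).
  { apply C2; [apply corner_in_Rm | apply corner_close]; auto; rewrite Abs; lra. }
  rewrite E in K1.
  replace (pd i (pd j f) x - pd j (pd i f) x) with
    ((pd i (pd j f) (corner i j s2 t2) - pd j (pd i f) x)
     - (pd i (pd j f) (corner i j s2 t2) - pd i (pd j f) x)) by ring.
  eapply Rle_lt_trans; [apply Rabs_triang|]. rewrite Rabs_Ropp. lra.
Qed.

End Schwarz.

(** Truncation of a Clifford-valued function to the blades of [R_(0,m)].
    The statement only speaks about these coefficients; after truncation all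
    coefficients are [C^4], so the operators can be handled coefficientwise. *)
Definition trunc (m : nat) (F : pt -> Cl) : pt -> Cl :=
  fun y C => if Nat.ltb C (2 ^ m) then F y C else 0.

Section Calculus.
Variables (m : nat) (Om : pt -> Prop).
Hypothesis HO : open_Rm m Om.

(** All coefficients (not only those of blades of [R_(0,m)]) are [C^n]. *)
Definition CkAll (n : nat) (G : pt -> Cl) : Prop := forall C, Ck m n Om (fun y => G y C).

Lemma CkAll_le n p G : (n <= p)%nat -> CkAll p G -> CkAll n G.
Proof. intros Hnp H C. apply (Ck_le m n p); auto. Qed.

Lemma CkAll_pd n G j : (j < m)%nat -> CkAll (S n) G -> CkAll n (pdC j G).
Proof. intros Hj H C. apply (Ck_pd m n Om _ j (H C) Hj). Qed.

Lemma CkAll_const n u : CkAll n (fun _ => u).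
Proof. intros C. apply Ck_const. Qed.

Lemma CkAll_add n G H : CkAll n G -> CkAll n H -> CkAll n (fun y => cl_add (G y) (H y)).
Proof. intros HG HH C. apply Ck_plus; auto. Qed.

Lemma CkAll_scal n c G : CkAll n G -> CkAll n (fun y => cl_scal c (G y)).
Proof. intros HG C. apply Ck_scal; auto. Qed.

Lemma CkAll_sum n N H : (forall a, (a < N)%nat -> CkAll n (H a)) ->
  CkAll n (fun y => cl_sum N (fun a => H a y)).
Proof. intros HH C. apply Ck_sum; auto. intros a Ha; apply HH; auto. Qed.

Lemma CkAll_eL n i G : CkAll n G -> CkAll n (fun y => eL i (G y)).
Proof. intros HG C. apply Ck_scal; auto. Qed.

Lemma CkAll_eR n i G : CkAll n G -> CkAll n (fun y => eR m i (G y)).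
Proof. intros HG C. apply Ck_scal; auto. Qed.

Lemma CkAll_mulvec n G : CkAll n G -> CkAll n (fun y => mulvec m (G y) y).
Proof. intros HG C. apply Ck_sum; auto. intros a _. apply Ck_coord, Ck_scal; auto. Qed.

Lemma CkAll_vecmul n G : CkAll n G -> CkAll n (fun y => vecmul m y (G y)).
Proof. intros HG C. apply Ck_sum; auto. intros a _. apply Ck_coord, Ck_scal; auto. Qed.

Lemma CkAll_grade_op n G : CkAll n G -> CkAll n (fun y => grade_op m (G y)).
Proof. intros HG C. apply Ck_sum; auto. intros a _. apply Ck_scal, Ck_scal; auto. Qed.

Lemma CkAll_has_pd n G j x C : CkAll (S n) G -> (j < m)%nat -> Om x ->
  has_pd j (fun y => G y C) x.
Proof. intros H Hj Hx. apply (Ck_has_pd m n Om _ j x (H C) Hj Hx). Qed.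

Lemma pdC_on G H j x : (forall y, Om y -> G y = H y) -> (j < m)%nat -> Om x ->
  pdC j G x = pdC j H x.
Proof.
  intros E Hj Hx. apply functional_extensionality; intros C. unfold pdC.
  apply (pd_on m Om); auto. intros; rewrite E; auto.
Qed.

Lemma pdC_add G H j x : CkAll 1 G -> CkAll 1 H -> (j < m)%nat -> Om x ->
  pdC j (fun y => cl_add (G y) (H y)) x = cl_add (pdC j G x) (pdC j H x).
Proof.
  intros HG HH Hj Hx. apply functional_extensionality; intros C.
  apply pd_plus; eapply CkAll_has_pd; eauto.
Qed.

Lemma pdC_scal c G j x : CkAll 1 G -> (j < m)%nat -> Om x ->
  pdC j (fun y => cl_scal c (G y)) x = cl_scal c (pdC j G x).
Proof.
  intros HG Hj Hx. apply functional_extensionality; intros C.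
  apply pd_scal; eapply CkAll_has_pd; eauto.
Qed.

Lemma pdC_sum N H j x : (forall a, (a < N)%nat -> CkAll 1 (H a)) -> (j < m)%nat -> Om x ->
  pdC j (fun y => cl_sum N (fun a => H a y)) x = cl_sum N (fun a => pdC j (H a) x).
Proof.
  intros HH Hj Hx. apply functional_extensionality; intros C.
  apply pd_sum. intros a Ha. eapply CkAll_has_pd; eauto.
Qed.

Lemma pdC_eL i G j x : CkAll 1 G -> (j < m)%nat -> Om x ->
  pdC j (fun y => eL i (G y)) x = eL i (pdC j G x).
Proof.
  intros HG Hj Hx. apply functional_extensionality; intros C.
  apply pd_scal; eapply CkAll_has_pd; eauto.
Qed.

Lemma pdC_eR i G j x : CkAll 1 G -> (j < m)%nat -> Om x ->
  pdC j (fun y => eR m i (G y)) x = eR m i (pdC j G x).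
Proof.
  intros HG Hj Hx. apply functional_extensionality; intros C.
  apply pd_scal; eapply CkAll_has_pd; eauto.
Qed.

Lemma schwarzC G i j x : CkAll 2 G -> (i < m)%nat -> (j < m)%nat -> Om x ->
  pdC i (pdC j G) x = pdC j (pdC i G) x.
Proof.
  intros HG Hi Hj Hx. apply functional_extensionality; intros C.
  apply (schwarz m Om (fun y => G y C) x); auto.
Qed.

Lemma pdC_mulvec G j x : CkAll 1 G -> (j < m)%nat -> Om x ->
  pdC j (fun y => mulvec m (G y) y) x = cl_add (eR m j (G x)) (mulvec m (pdC j G x) x).
Proof.
  intros HG Hj Hx. apply functional_extensionality; intros C. unfold pdC, mulvec, cl_add.
  assert (D : forall a, has_pd j (fun y => eR m a (G y) C) x)
    by (intros; apply pd_scal; eapply CkAll_has_pd; eauto).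
  rewrite (proj1 (pd_sum _ _ _ _ (fun a _ => proj2 (pd_coord j a _ x (D a))))).
  rewrite (sumR_ext m _ (fun a => (if Nat.eqb a j then eR m a (G x) C else 0) +
      x a * eR m a (pdC j G x) C)).
  - rewrite sumR_add, sumR_kron; auto.
  - intros a Ha. rewrite (proj1 (pd_coord j a _ x (D a))). f_equal. f_equal.
    apply pd_scal. eapply CkAll_has_pd; eauto.
Qed.

Lemma pdC_vecmul G j x : CkAll 1 G -> (j < m)%nat -> Om x ->
  pdC j (fun y => vecmul m y (G y)) x = cl_add (eL j (G x)) (vecmul m x (pdC j G x)).
Proof.
  intros HG Hj Hx. apply functional_extensionality; intros C. unfold pdC, vecmul, cl_add.
  assert (D : forall a, has_pd j (fun y => eL a (G y) C) x)
    by (intros; apply pd_scal; eapply CkAll_has_pd; eauto).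
  rewrite (proj1 (pd_sum _ _ _ _ (fun a _ => proj2 (pd_coord j a _ x (D a))))).
  rewrite (sumR_ext m _ (fun a => (if Nat.eqb a j then eL a (G x) C else 0) +
      x a * eL a (pdC j G x) C)).
  - rewrite sumR_add, sumR_kron; auto.
  - intros a Ha. rewrite (proj1 (pd_coord j a _ x (D a))). f_equal. f_equal.
    apply pd_scal. eapply CkAll_has_pd; eauto.
Qed.

Lemma pdC_grade_op G j x : CkAll 1 G -> (j < m)%nat -> Om x ->
  pdC j (fun y => grade_op m (G y)) x = grade_op m (pdC j G x).
Proof.
  intros HG Hj Hx. apply functional_extensionality; intros C. unfold pdC, grade_op.
  assert (D : forall a, has_pd j (fun y => eL a (eR m a (G y)) C) x)
    by (intros; apply pd_scal, pd_scal; eapply CkAll_has_pd; eauto).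
  rewrite (proj1 (pd_sum _ _ _ _ (fun a _ => D a))). apply sumR_ext; intros a Ha.
  pose proof (CkAll_has_pd 0 G j x (flip (flip C a) a) HG Hj Hx) as Dg.
  unfold eL, eR.
  rewrite (proj1 (pd_scal j (sL a C) _ x (proj2 (pd_scal j (sR m a (flip C a)) _ x Dg)))).
  rewrite (proj1 (pd_scal j _ _ x Dg)). reflexivity.
Qed.

Definition Dl (G : pt -> Cl) : pt -> Cl := fun y => cl_sum m (fun j => eL j (pdC j G y)).
Definition Dr (G : pt -> Cl) : pt -> Cl := fun y => cl_sum m (fun j => eR m j (pdC j G y)).

Lemma CkAll_Dl n G : CkAll (S n) G -> CkAll n (Dl G).
Proof. intros HG. apply CkAll_sum. intros j Hj. apply CkAll_eL, CkAll_pd; auto. Qed.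

Lemma CkAll_Dr n G : CkAll (S n) G -> CkAll n (Dr G).
Proof. intros HG. apply CkAll_sum. intros j Hj. apply CkAll_eR, CkAll_pd; auto. Qed.

Lemma CkAll_Lap n G : CkAll (S (S n)) G -> CkAll n (Lap m G).
Proof. intros HG. apply CkAll_sum. intros j Hj. apply CkAll_pd, CkAll_pd; auto. Qed.

Create HintDb smooth discriminated.
#[local] Hint Resolve CkAll_add CkAll_scal CkAll_eL CkAll_eR CkAll_mulvec CkAll_vecmul
  CkAll_grade_op CkAll_const CkAll_Dl CkAll_Dr CkAll_Lap CkAll_pd : smooth.
#[local] Hint Extern 1 (CkAll ?n ?G) =>
  match goal with H : CkAll ?p G |- _ => apply (CkAll_le n p G); [lia | exact H] end : smooth.
#[local] Hint Extern 1 (_ < _)%nat => lia : smooth.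

Ltac smooth := solve [eauto 12 with smooth].

Lemma Dl_on G H y : (forall z, Om z -> G z = H z) -> Om y -> Dl G y = Dl H y.
Proof. intros E Hy. unfold Dl. apply cl_sum_ext; intros j Hj. rewrite (pdC_on G H); auto. Qed.

Lemma Dr_on G H y : (forall z, Om z -> G z = H z) -> Om y -> Dr G y = Dr H y.
Proof. intros E Hy. unfold Dr. apply cl_sum_ext; intros j Hj. rewrite (pdC_on G H); auto. Qed.

Lemma Lap_on G H y : (forall z, Om z -> G z = H z) -> Om y -> Lap m G y = Lap m H y.
Proof.
  intros E Hy. unfold Lap. apply cl_sum_ext; intros j Hj.
  apply pdC_on; auto. intros z Hz. apply pdC_on; auto.
Qed.

Lemma Dl_add G H y : CkAll 1 G -> CkAll 1 H -> Om y ->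
  Dl (fun z => cl_add (G z) (H z)) y = cl_add (Dl G y) (Dl H y).
Proof.
  intros HG HH Hy. apply functional_extensionality; intros C. unfold Dl, cl_sum.
  rewrite (sumR_ext m _ (fun j => eL j (pdC j G y) C + eL j (pdC j H y) C)), sumR_add;
    [reflexivity|].
  intros j Hj. rewrite pdC_add, eL_add; auto.
Qed.

Lemma Dr_add G H y : CkAll 1 G -> CkAll 1 H -> Om y ->
  Dr (fun z => cl_add (G z) (H z)) y = cl_add (Dr G y) (Dr H y).
Proof.
  intros HG HH Hy. apply functional_extensionality; intros C. unfold Dr, cl_sum.
  rewrite (sumR_ext m _ (fun j => eR m j (pdC j G y) C + eR m j (pdC j H y) C)), sumR_add;
    [reflexivity|].
  intros j Hj. rewrite pdC_add, eR_add; auto.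
Qed.

Lemma Lap_add G H y : CkAll 2 G -> CkAll 2 H -> Om y ->
  Lap m (fun z => cl_add (G z) (H z)) y = cl_add (Lap m G y) (Lap m H y).
Proof.
  intros HG HH Hy. apply functional_extensionality; intros C. unfold Lap, cl_sum.
  rewrite (sumR_ext m _ (fun j => pdC j (pdC j G) y C + pdC j (pdC j H) y C)), sumR_add;
    [reflexivity|].
  intros j Hj. rewrite (pdC_on _ (fun z => cl_add (pdC j G z) (pdC j H z))); auto.
  - rewrite pdC_add; auto; smooth.
  - intros z Hz. apply pdC_add; auto; smooth.
Qed.

Lemma Dl_scal c G y : CkAll 1 G -> Om y -> Dl (fun z => cl_scal c (G z)) y = cl_scal c (Dl G y).
Proof.
  intros HG Hy. apply functional_extensionality; intros C. unfold Dl, cl_sum.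
  rewrite (sumR_ext m _ (fun j => c * eL j (pdC j G y) C)), sumR_scal; [reflexivity|].
  intros j Hj. rewrite pdC_scal; auto. unfold eL, eR, cl_scal. ring.
Qed.

Lemma Dr_scal c G y : CkAll 1 G -> Om y -> Dr (fun z => cl_scal c (G z)) y = cl_scal c (Dr G y).
Proof.
  intros HG Hy. apply functional_extensionality; intros C. unfold Dr, cl_sum.
  rewrite (sumR_ext m _ (fun j => c * eR m j (pdC j G y) C)), sumR_scal; [reflexivity|].
  intros j Hj. rewrite pdC_scal; auto. unfold eL, eR, cl_scal. ring.
Qed.

Lemma Lap_scal c G y : CkAll 2 G -> Om y ->
  Lap m (fun z => cl_scal c (G z)) y = cl_scal c (Lap m G y).
Proof.
  intros HG Hy. apply functional_extensionality; intros C. unfold Lap, cl_sum.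
  rewrite (sumR_ext m _ (fun j => c * pdC j (pdC j G) y C)), sumR_scal; [reflexivity|].
  intros j Hj. rewrite (pdC_on _ (fun z => cl_scal c (pdC j G z))); auto.
  - rewrite pdC_scal; auto; smooth.
  - intros z Hz. apply pdC_scal; auto; smooth.
Qed.

Lemma pdC_Dl G i x : CkAll 2 G -> (i < m)%nat -> Om x ->
  pdC i (Dl G) x = cl_sum m (fun j => eL j (pdC i (pdC j G) x)).
Proof.
  intros HG Hi Hx. unfold Dl. rewrite pdC_sum; auto; [|intros; smooth].
  apply cl_sum_ext; intros j Hj. apply pdC_eL; auto; smooth.
Qed.

Lemma pdC_Dr G i x : CkAll 2 G -> (i < m)%nat -> Om x ->
  pdC i (Dr G) x = cl_sum m (fun j => eR m j (pdC i (pdC j G) x)).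
Proof.
  intros HG Hi Hx. unfold Dr. rewrite pdC_sum; auto; [|intros; smooth].
  apply cl_sum_ext; intros j Hj. apply pdC_eR; auto; smooth.
Qed.

Definition hessian (G : pt -> Cl) (y : pt) (i j : nat) : Cl := pdC i (pdC j G) y.

Lemma hessian_symmetric G y : CkAll 2 G -> Om y -> symmetric m (hessian G y).
Proof. intros HG Hy i j Hi Hj. apply schwarzC; auto. Qed.

Lemma Dl_Dl G y : CkAll 2 G -> Om y -> Dl (Dl G) y = cl_scal (-1) (Lap m G y).
Proof.
  intros HG Hy. apply functional_extensionality; intros C. unfold Dl at 1, cl_sum, cl_scal.
  rewrite (sumR_ext m _ (fun i => sumR m (fun j => eL i (eL j (hessian G y i j)) C)))
    by (intros i Hi; rewrite pdC_Dl; auto; apply eL_sum).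
  rewrite eL_symmetric_sum by (apply hessian_symmetric; auto). unfold Lap, cl_sum, hessian. ring.
Qed.

Lemma Dr_Dr G y : CkAll 2 G -> Om y -> Dr (Dr G) y = cl_scal (-1) (Lap m G y).
Proof.
  intros HG Hy. apply functional_extensionality; intros C. unfold Dr at 1, cl_sum, cl_scal.
  rewrite (sumR_ext m _ (fun i => sumR m (fun j => eR m i (eR m j (hessian G y i j)) C)))
    by (intros i Hi; rewrite pdC_Dr; auto; apply eR_sum).
  rewrite eR_symmetric_sum by (apply hessian_symmetric; auto). unfold Lap, cl_sum, hessian. ring.
Qed.

Lemma Dl_Dr G y : CkAll 2 G -> Om y -> Dl (Dr G) y = Dr (Dl G) y.
Proof.
  intros HG Hy. apply functional_extensionality; intros C. unfold Dl at 1. unfold Dr at 2, cl_sum.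
  rewrite (sumR_ext m _ (fun i => sumR m (fun j => eL i (eR m j (hessian G y i j)) C)))
    by (intros i Hi; rewrite pdC_Dr; auto; apply eL_sum).
  rewrite (sumR_ext m (fun j => eR m j (pdC j (Dl G) y) C)
      (fun j => sumR m (fun i => eR m j (eL i (hessian G y j i)) C)))
    by (intros j Hj; rewrite pdC_Dl; auto; apply eR_sum).
  rewrite sumR_swap. apply sumR_ext; intros i Hi; apply sumR_ext; intros j Hj.
  rewrite eL_eR_comm, (hessian_symmetric G y HG Hy i j); auto.
Qed.

Lemma Lap_Dl G y : CkAll 3 G -> Om y -> Lap m (Dl G) y = Dl (Lap m G) y.
Proof.
  intros HG Hy.
  assert (E : Dl (Dl (Dl G)) y = cl_scal (-1) (Dl (Lap m G) y)).
  { rewrite (Dl_on _ (fun z => cl_scal (-1) (Lap m G z))); auto.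
    - apply Dl_scal; auto; smooth.
    - intros z Hz. apply Dl_Dl; auto; smooth. }
  rewrite Dl_Dl in E; auto; [|smooth].
  apply functional_extensionality; intros C. apply (f_equal (fun u => u C)) in E.
  unfold cl_scal in E. lra.
Qed.

Lemma Lap_Dr G y : CkAll 3 G -> Om y -> Lap m (Dr G) y = Dr (Lap m G) y.
Proof.
  intros HG Hy.
  assert (E : Dr (Dr (Dr G)) y = cl_scal (-1) (Dr (Lap m G) y)).
  { rewrite (Dr_on _ (fun z => cl_scal (-1) (Lap m G z))); auto.
    - apply Dr_scal; auto; smooth.
    - intros z Hz. apply Dr_Dr; auto; smooth. }
  rewrite Dr_Dr in E; auto; [|smooth].
  apply functional_extensionality; intros C. apply (f_equal (fun u => u C)) in E.
  unfold cl_scal in E. lra.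
Qed.

Lemma Dl_mulvec G y : CkAll 1 G -> Om y ->
  Dl (fun z => mulvec m (G z) z) y = cl_add (mulvec m (Dl G y) y) (grade_op m (G y)).
Proof.
  intros HG Hy. apply functional_extensionality; intros C. unfold Dl, cl_sum, cl_add.
  rewrite (sumR_ext m _ (fun j => mulvec m (eL j (pdC j G y)) y C + eL j (eR m j (G y)) C)).
  - rewrite sumR_add, <- mulvec_sum. reflexivity.
  - intros j Hj. rewrite pdC_mulvec, eL_add, eL_mulvec by auto. unfold cl_add. ring.
Qed.

Lemma Dr_vecmul G y : CkAll 1 G -> Om y ->
  Dr (fun z => vecmul m z (G z)) y = cl_add (vecmul m y (Dr G y)) (grade_op m (G y)).
Proof.
  intros HG Hy. apply functional_extensionality; intros C. unfold Dr, cl_sum, cl_add.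
  rewrite (sumR_ext m _ (fun j => vecmul m y (eR m j (pdC j G y)) C + eL j (eR m j (G y)) C)).
  - rewrite sumR_add, <- vecmul_sum. reflexivity.
  - intros j Hj. rewrite pdC_vecmul, eR_add, eR_vecmul, eL_eR_comm by auto. unfold cl_add. ring.
Qed.

Lemma Lap_mulvec G y : CkAll 2 G -> Om y ->
  Lap m (fun z => mulvec m (G z) z) y = cl_add (mulvec m (Lap m G y) y) (cl_scal 2 (Dr G y)).
Proof.
  intros HG Hy. apply functional_extensionality; intros C. unfold Lap, Dr, cl_sum, cl_add, cl_scal.
  rewrite (sumR_ext m _ (fun j => mulvec m (pdC j (pdC j G) y) y C + 2 * eR m j (pdC j G y) C)).
  - rewrite sumR_add, sumR_scal, <- mulvec_sum. reflexivity.
  - intros j Hj.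
    rewrite (pdC_on _ (fun z => cl_add (eR m j (G z)) (mulvec m (pdC j G z) z))); auto;
      [| intros; apply pdC_mulvec; auto; smooth].
    rewrite pdC_add, pdC_eR, pdC_mulvec by (auto; smooth). unfold cl_add. ring.
Qed.

Lemma Lap_vecmul G y : CkAll 2 G -> Om y ->
  Lap m (fun z => vecmul m z (G z)) y = cl_add (vecmul m y (Lap m G y)) (cl_scal 2 (Dl G y)).
Proof.
  intros HG Hy. apply functional_extensionality; intros C. unfold Lap, Dl, cl_sum, cl_add, cl_scal.
  rewrite (sumR_ext m _ (fun j => vecmul m y (pdC j (pdC j G) y) C + 2 * eL j (pdC j G y) C)).
  - rewrite sumR_add, sumR_scal, <- vecmul_sum. reflexivity.
  - intros j Hj.
    rewrite (pdC_on _ (fun z => cl_add (eL j (G z)) (vecmul m z (pdC j G z)))); auto;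
      [| intros; apply pdC_vecmul; auto; smooth].
    rewrite pdC_add, pdC_eL, pdC_vecmul by (auto; smooth). unfold cl_add. ring.
Qed.

Lemma grade_op_Dl G y : CkAll 1 G -> Om y ->
  cl_add (grade_op m (Dl G y)) (Dl (fun z => grade_op m (G z)) y) = cl_scal (-2) (Dr G y).
Proof.
  intros HG Hy. apply functional_extensionality; intros C. unfold Dl, Dr, cl_sum, cl_add, cl_scal.
  rewrite grade_op_sum, <- sumR_add, <- sumR_scal. apply sumR_ext; intros j Hj.
  rewrite pdC_grade_op by auto. apply grade_op_eL; auto.
Qed.

Lemma grade_op_Dr G y : CkAll 1 G -> Om y ->
  cl_add (grade_op m (Dr G y)) (Dr (fun z => grade_op m (G z)) y) = cl_scal (-2) (Dl G y).
Proof.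
  intros HG Hy. apply functional_extensionality; intros C. unfold Dl, Dr, cl_sum, cl_add, cl_scal.
  rewrite grade_op_sum, <- sumR_add, <- sumR_scal. apply sumR_ext; intros j Hj.
  rewrite pdC_grade_op by auto. apply grade_op_eR; auto.
Qed.

Section Graded.
Variables (c : R) (G : pt -> Cl).
Hypothesis HGc : forall z, Om z -> grade_op m (G z) = cl_scal c (G z).

Lemma Dl3_mulvec y : CkAll 3 G -> Om y ->
  Dl (Dl (Dl (fun z => mulvec m (G z) z))) y =
  cl_add (cl_scal (-1) (mulvec m (Dl (Lap m G) y) y))
    (cl_add (cl_scal (-2) (Dl (Dr G) y)) (cl_scal (- c) (Lap m G y))).
Proof.
  intros HG Hy.
  assert (S1 : forall z, Om z -> Dl (fun z => mulvec m (G z) z) z =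
      cl_add (mulvec m (Dl G z) z) (cl_scal c (G z))).
  { intros z Hz. rewrite Dl_mulvec, HGc; auto; smooth. }
  assert (S2 : forall z, Om z -> Dl (Dl (fun z => mulvec m (G z) z)) z =
      cl_add (cl_add (mulvec m (Dl (Dl G) z) z) (grade_op m (Dl G z))) (cl_scal c (Dl G z))).
  { intros z Hz. rewrite (Dl_on _ _ z S1 Hz), Dl_add, Dl_mulvec, Dl_scal; auto; smooth. }
  rewrite (Dl_on _ _ y S2 Hy), !Dl_add, Dl_mulvec, !Dl_scal by (auto; smooth).
  assert (E3 : Dl (Dl (Dl G)) y = cl_scal (-1) (Dl (Lap m G) y)).
  { rewrite (Dl_on _ (fun z => cl_scal (-1) (Lap m G z))); [apply Dl_scal; auto; smooth | | auto].
    intros z Hz. apply Dl_Dl; auto; smooth. }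
  pose proof (grade_op_Dl (Dl G) y ltac:(smooth) Hy) as T.
  rewrite E3, mulvec_scal, Dl_Dl by (auto; smooth).
  rewrite Dl_Dl, <- Dl_Dr in T by (auto; smooth).
  apply functional_extensionality; intros C. apply (f_equal (fun u => u C)) in T.
  unfold cl_add, cl_scal in *. lra.
Qed.

Lemma Dr3_vecmul y : CkAll 3 G -> Om y ->
  Dr (Dr (Dr (fun z => vecmul m z (G z)))) y =
  cl_add (cl_scal (-1) (vecmul m y (Dr (Lap m G) y)))
    (cl_add (cl_scal (-2) (Dl (Dr G) y)) (cl_scal (- c) (Lap m G y))).
Proof.
  intros HG Hy.
  assert (S1 : forall z, Om z -> Dr (fun z => vecmul m z (G z)) z =
      cl_add (vecmul m z (Dr G z)) (cl_scal c (G z))).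
  { intros z Hz. rewrite Dr_vecmul, HGc; auto; smooth. }
  assert (S2 : forall z, Om z -> Dr (Dr (fun z => vecmul m z (G z))) z =
      cl_add (cl_add (vecmul m z (Dr (Dr G) z)) (grade_op m (Dr G z))) (cl_scal c (Dr G z))).
  { intros z Hz. rewrite (Dr_on _ _ z S1 Hz), Dr_add, Dr_vecmul, Dr_scal; auto; smooth. }
  rewrite (Dr_on _ _ y S2 Hy), !Dr_add, Dr_vecmul, !Dr_scal by (auto; smooth).
  assert (E3 : Dr (Dr (Dr G)) y = cl_scal (-1) (Dr (Lap m G) y)).
  { rewrite (Dr_on _ (fun z => cl_scal (-1) (Lap m G z))); [apply Dr_scal; auto; smooth | | auto].
    intros z Hz. apply Dr_Dr; auto; smooth. }
  pose proof (grade_op_Dr (Dr G) y ltac:(smooth) Hy) as T.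
  rewrite E3, vecmul_scal, Dr_Dr by (auto; smooth).
  rewrite Dr_Dr in T by (auto; smooth).
  apply functional_extensionality; intros C. apply (f_equal (fun u => u C)) in T.
  unfold cl_add, cl_scal in *. lra.
Qed.

Lemma Lap_xGx y : CkAll 2 G -> Om y ->
  Lap m (fun z => mulvec m (vecmul m z (G z)) z) y =
  cl_add (cl_add (mulvec m (vecmul m y (Lap m G y)) y) (cl_scal 2 (mulvec m (Dl G y) y)))
    (cl_add (cl_scal 2 (vecmul m y (Dr G y))) (cl_scal (2 * c) (G y))).
Proof.
  intros HG Hy.
  rewrite (Lap_mulvec (fun z => vecmul m z (G z))), Lap_vecmul, Dr_vecmul, HGc by (auto; smooth).
  rewrite mulvec_add, mulvec_scal.
  apply functional_extensionality; intros C. unfold cl_add, cl_scal. ring.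
Qed.

End Graded.

(** Agreement on the coefficients of blades of [R_(0,m)]: the operations of
    the statement, written with the Clifford product, agree with their
    coefficientwise counterparts. *)
Definition agree (G H : pt -> Cl) : Prop := forall y C, (C < 2 ^ m)%nat -> G y C = H y C.

Lemma agree_trunc G : agree G (trunc m G).
Proof. intros y C HC. unfold trunc. destruct (Nat.ltb_spec C (2 ^ m)); [reflexivity | lia]. Qed.

Lemma agree_pdC G H j : agree G H -> agree (pdC j G) (pdC j H).
Proof.
  intros E y C HC. unfold pdC. f_equal. apply functional_extensionality; intros z. apply E; auto.
Qed.

Lemma agree_Lap G H : agree G H -> agree (Lap m G) (Lap m H).
Proof.
  intros E y C HC. unfold Lap, cl_sum. apply sumR_ext; intros j Hj.
  apply (agree_pdC _ _ j (agree_pdC _ _ j E)); auto.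
Qed.

Lemma agree_DirL G H : agree G H -> agree (DirL m G) (Dl H).
Proof.
  intros E y C HC. unfold DirL, Dl, cl_sum. apply sumR_ext; intros j Hj.
  rewrite cl_mul_genl by auto. unfold eL. f_equal. apply (agree_pdC _ _ j E), flip_lt; auto.
Qed.

Lemma agree_DirR G H : agree G H -> agree (DirR m G) (Dr H).
Proof.
  intros E y C HC. unfold DirR, Dr, cl_sum. apply sumR_ext; intros j Hj.
  rewrite cl_mul_genr by auto. unfold eR. f_equal. apply (agree_pdC _ _ j E), flip_lt; auto.
Qed.

Lemma agree_mulvec G H : agree G H ->
  agree (fun y => cl_mul m (G y) (vec m y)) (fun y => mulvec m (H y) y).
Proof.
  intros E y C HC. rewrite cl_mul_vec_r by auto. unfold mulvec. apply sumR_ext; intros a Ha.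
  unfold eR. rewrite E by (apply flip_lt; auto). reflexivity.
Qed.

Lemma agree_vecmul G H : agree G H ->
  agree (fun y => cl_mul m (vec m y) (G y)) (fun y => vecmul m y (H y)).
Proof.
  intros E y C HC. rewrite cl_mul_vec_l by auto. unfold vecmul. apply sumR_ext; intros a Ha.
  unfold eL. rewrite E by (apply flip_lt; auto). reflexivity.
Qed.

Definition vanishes (G : pt -> Cl) : Prop :=
  forall z, Om z -> forall C, (C < 2 ^ m)%nat -> G z C = 0.

Lemma pdC_coef_zero G j C x : (j < m)%nat -> Om x -> (forall z, Om z -> G z C = 0) ->
  pdC j G x C = 0.
Proof.
  intros Hj Hx H. unfold pdC. rewrite (proj1 (pd_on m Om j _ (fun _ => 0) x HO Hx Hj H)).
  apply pd_const.
Qed.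

Lemma vanishes_Dl G : vanishes G -> vanishes (Dl G).
Proof.
  intros H z Hz C HC. unfold Dl, cl_sum.
  rewrite (sumR_ext _ _ (fun _ => 0)), sumR_zero; auto.
  intros j Hj. unfold eL. rewrite pdC_coef_zero; auto; [ring|].
  intros w Hw. apply H; auto. apply flip_lt; auto.
Qed.

Lemma vanishes_Dr G : vanishes G -> vanishes (Dr G).
Proof.
  intros H z Hz C HC. unfold Dr, cl_sum.
  rewrite (sumR_ext _ _ (fun _ => 0)), sumR_zero; auto.
  intros j Hj. unfold eR. rewrite pdC_coef_zero; auto; [ring|].
  intros w Hw. apply H; auto. apply flip_lt; auto.
Qed.

Lemma vanishes_Lap G : vanishes G -> vanishes (Lap m G).
Proof.
  intros H z Hz C HC. unfold Lap, cl_sum.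
  rewrite (sumR_ext _ _ (fun _ => 0)), sumR_zero; auto.
  intros j Hj. apply pdC_coef_zero; auto. intros w Hw. apply pdC_coef_zero; auto.
Qed.

Lemma vanishes_local G H : vanishes G -> (forall z, Om z -> H z = G z) -> vanishes H.
Proof. intros HG E z Hz C HC. rewrite E; auto. Qed.

Lemma cl_zero_iff G H : (forall x, Om x -> forall C, (C < 2 ^ m)%nat -> G x C = H x C) ->
  ((forall x, Om x -> cl_zero m (G x)) <-> vanishes H).
Proof.
  intros E. unfold cl_zero. split; intros Z x Hx C HC; [rewrite <- E | rewrite E]; auto.
Qed.

Lemma vanishes_equiv (P Q : pt -> Cl) r : r <> 0 ->
  (forall z, Om z -> forall C, (C < 2 ^ m)%nat -> P z C = r * Q z C) ->
  (vanishes Q <-> vanishes P).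
Proof.
  intros Hr E. split; intros H z Hz C HC; specialize (E z Hz C HC).
  - rewrite E, H; auto. ring.
  - rewrite H in E by auto. symmetry in E. apply Rmult_integral in E. lra.
Qed.

Section Proposition.
Variables (k : nat) (F : pt -> Cl).
Hypothesis HF : CkCl m 4 Om F.
Hypothesis Hkv : forall x, Om x -> is_kvector m k (F x).

Local Notation Ft := (trunc m F).
Local Notation c := (grade_const m k).

Lemma trunc_smooth : CkAll 4 Ft.
Proof.
  intros C. unfold trunc. destruct (Nat.ltb_spec C (2 ^ m)); [apply HF; auto | apply Ck_const].
Qed.

Lemma trunc_kvector z C : Om z -> grade m C <> k -> Ft z C = 0.
Proof.
  intros Hz HC. unfold trunc. destruct (Nat.ltb_spec C (2 ^ m)); auto. apply (Hkv z Hz); auto.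
Qed.

Lemma trunc_graded z : Om z -> grade_op m (Ft z) = cl_scal c (Ft z).
Proof. intros Hz. apply grade_op_kvector. intros C HC. apply trunc_kvector; auto. Qed.

Lemma lap_trunc_graded z : Om z -> grade_op m (Lap m Ft z) = cl_scal c (Lap m Ft z).
Proof.
  intros Hz. apply grade_op_kvector. intros C HC. unfold Lap, cl_sum.
  rewrite (sumR_ext _ _ (fun _ => 0)), sumR_zero; auto.
  intros j Hj. apply pdC_coef_zero; auto. intros w Hw.
  apply pdC_coef_zero; auto. intros v Hv. apply trunc_kvector; auto.
Qed.

#[local] Hint Extern 1 (CkAll ?n (trunc m F)) =>
  apply (CkAll_le n 4); [lia | exact trunc_smooth] : smooth.

Lemma bilap_xFx y : Om y ->
  Lap m (Lap m (fun z => mulvec m (vecmul m z (Ft z)) z)) y =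
  cl_add (cl_add (mulvec m (vecmul m y (Lap m (Lap m Ft) y)) y)
           (cl_scal 4 (cl_add (mulvec m (Dl (Lap m Ft) y) y) (vecmul m y (Dr (Lap m Ft) y)))))
    (cl_add (cl_scal 8 (Dl (Dr Ft) y)) (cl_scal (4 * c) (Lap m Ft y))).
Proof.
  intros Hy.
  rewrite (Lap_on _ _ y (fun z Hz => Lap_xGx c Ft trunc_graded z ltac:(smooth) Hz) Hy).
  rewrite !Lap_add, !Lap_scal by (auto; smooth).
  rewrite (Lap_xGx c (Lap m Ft) lap_trunc_graded), Lap_mulvec, Lap_vecmul, Lap_Dl, Lap_Dr, Dl_Dr
    by (auto; smooth).
  apply functional_extensionality; intros C. unfold cl_add, cl_scal. ring.
Qed.

Lemma reduced_identities :
  vanishes (Dl (Lap m Ft)) -> vanishes (Dr (Lap m Ft)) -> vanishes (Lap m (Lap m Ft)) ->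
  forall y, Om y -> forall C, (C < 2 ^ m)%nat ->
  Dl (Dl (Dl (fun z => mulvec m (Ft z) z))) y C = -2 * Dl (Dr Ft) y C - c * Lap m Ft y C /\
  Dr (Dr (Dr (fun z => vecmul m z (Ft z)))) y C = -2 * Dl (Dr Ft) y C - c * Lap m Ft y C /\
  Lap m (Lap m (fun z => mulvec m (vecmul m z (Ft z)) z)) y C =
    8 * Dl (Dr Ft) y C + 4 * c * Lap m Ft y C.
Proof.
  intros V1 V2 V3 y Hy C HC.
  rewrite (Dl3_mulvec c Ft trunc_graded), (Dr3_vecmul c Ft trunc_graded), bilap_xFx
    by (auto; smooth).
  unfold cl_add, cl_scal.
  rewrite (mulvec_below m (Dl (Lap m Ft) y)), (vecmul_below m (Dr (Lap m Ft) y)),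
    (mulvec_below m (vecmul m y (Lap m (Lap m Ft) y)));
    auto; [repeat split; ring | intros; apply vecmul_below; auto].
Qed.

Lemma harmonic_vanishing : vanishes (Lap m Ft) ->
  vanishes (Dl (Lap m Ft)) /\ vanishes (Dr (Lap m Ft)) /\ vanishes (Lap m (Lap m Ft)).
Proof.
  intros H. split; [|split]; [apply vanishes_Dl | apply vanishes_Dr | apply vanishes_Lap]; auto.
Qed.

Lemma inframonogenic_vanishing : vanishes (Dl (Dr Ft)) ->
  vanishes (Dl (Lap m Ft)) /\ vanishes (Dr (Lap m Ft)) /\ vanishes (Lap m (Lap m Ft)).
Proof.
  intros H.
  assert (V1 : vanishes (Dl (Lap m Ft))).
  { apply vanishes_local with (fun z => cl_scal (-1) (Dr (Dl (Dr Ft)) z)).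
    - intros z Hz C HC. unfold cl_scal. rewrite (vanishes_Dr _ H); auto. ring.
    - intros z Hz. rewrite <- Lap_Dl by (auto; smooth).
      rewrite (Dr_on (Dl (Dr Ft)) (Dr (Dl Ft))) by (auto; intros; apply Dl_Dr; auto; smooth).
      rewrite Dr_Dr by (auto; smooth).
      apply functional_extensionality; intros C. unfold cl_scal. ring. }
  assert (V2 : vanishes (Dr (Lap m Ft))).
  { apply vanishes_local with (fun z => cl_scal (-1) (Dl (Dl (Dr Ft)) z)).
    - intros z Hz C HC. unfold cl_scal. rewrite (vanishes_Dl _ H); auto. ring.
    - intros z Hz. rewrite <- Lap_Dr, Dl_Dl by (auto; smooth).
      apply functional_extensionality; intros C. unfold cl_scal. ring. }
  split; [|split]; auto.
  apply vanishes_local with (fun z => cl_scal (-1) (Dl (Dl (Lap m Ft)) z)).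
  - intros z Hz C HC. unfold cl_scal. rewrite (vanishes_Dl _ V1); auto. ring.
  - intros z Hz. rewrite Dl_Dl by (auto; smooth).
    apply functional_extensionality; intros C. unfold cl_scal. ring.
Qed.

Lemma harmonic_iff : harmonic m Om F <-> vanishes (Lap m Ft).
Proof. apply cl_zero_iff. intros x _. apply agree_Lap, agree_trunc. Qed.

Lemma inframonogenic_iff : inframonogenic m Om F <-> vanishes (Dl (Dr Ft)).
Proof.
  apply cl_zero_iff. intros x Hx C HC. unfold Dl, cl_sum.
  apply sumR_ext; intros i Hi. rewrite pdC_Dr by (auto; smooth). unfold cl_sum. rewrite eL_sum.
  apply sumR_ext; intros j Hj.
  rewrite cl_mul_genr by auto. unfold eR at 1. rewrite cl_mul_genl by (auto; apply flip_lt; auto).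
  rewrite eL_eR_comm by auto. unfold eL, eR.
  rewrite (agree_pdC _ _ i (agree_pdC _ _ j (agree_trunc F))) by (repeat apply flip_lt; auto).
  reflexivity.
Qed.

Lemma left3_iff : left3mono_Fx m Om F <-> vanishes (Dl (Dl (Dl (fun z => mulvec m (Ft z) z)))).
Proof.
  apply cl_zero_iff. intros x _.
  apply agree_DirL, agree_DirL, agree_DirL, agree_mulvec, agree_trunc.
Qed.

Lemma right3_iff : right3mono_xF m Om F <-> vanishes (Dr (Dr (Dr (fun z => vecmul m z (Ft z))))).
Proof.
  apply cl_zero_iff. intros x _.
  apply agree_DirR, agree_DirR, agree_DirR, agree_vecmul, agree_trunc.
Qed.

Lemma biharm_iff :
  biharm_xFx m Om F <-> vanishes (Lap m (Lap m (fun z => mulvec m (vecmul m z (Ft z)) z))).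
Proof.
  apply cl_zero_iff. intros x _.
  apply agree_Lap, agree_Lap, (agree_mulvec (fun y => cl_mul m (vec m y) (F y))),
    agree_vecmul, agree_trunc.
Qed.

Lemma harmonic_case : vanishes (Lap m Ft) ->
  (vanishes (Dl (Dr Ft)) <-> vanishes (Dl (Dl (Dl (fun z => mulvec m (Ft z) z))))) /\
  (vanishes (Dl (Dr Ft)) <-> vanishes (Dr (Dr (Dr (fun z => vecmul m z (Ft z)))))) /\
  (vanishes (Dl (Dr Ft)) <-> vanishes (Lap m (Lap m (fun z => mulvec m (vecmul m z (Ft z)) z)))).
Proof.
  intros H. destruct (harmonic_vanishing H) as (V1 & V2 & V3).
  pose proof (reduced_identities V1 V2 V3) as Id.
  split; [|split]; [apply vanishes_equiv with (-2) | apply vanishes_equiv with (-2)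
    | apply vanishes_equiv with 8]; try lra; intros y Hy C HC;
    destruct (Id y Hy C HC) as (E1 & E2 & E3); rewrite ?E1, ?E2, ?E3, (H y Hy C HC); ring.
Qed.

Lemma inframonogenic_case : (2 * k <> m)%nat -> vanishes (Dl (Dr Ft)) ->
  (vanishes (Lap m Ft) <-> vanishes (Dl (Dl (Dl (fun z => mulvec m (Ft z) z))))) /\
  (vanishes (Lap m Ft) <-> vanishes (Dr (Dr (Dr (fun z => vecmul m z (Ft z)))))) /\
  (vanishes (Lap m Ft) <-> vanishes (Lap m (Lap m (fun z => mulvec m (vecmul m z (Ft z)) z)))).
Proof.
  intros Hk H. pose proof (grade_const_neq0 m k Hk) as Hc.
  destruct (inframonogenic_vanishing H) as (V1 & V2 & V3).
  pose proof (reduced_identities V1 V2 V3) as Id.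
  split; [|split]; [apply vanishes_equiv with (- c) | apply vanishes_equiv with (- c)
    | apply vanishes_equiv with (4 * c)]; try lra; intros y Hy C HC;
    destruct (Id y Hy C HC) as (E1 & E2 & E3); rewrite ?E1, ?E2, ?E3, (H y Hy C HC); ring.
Qed.

End Proposition.

End Calculus.

(** Proposition 3.  After translating every predicate to the truncated
    field, the two halves are [harmonic_case] and [inframonogenic_case]. *)
Theorem proposition3 (m k : nat) (Om : pt -> Prop) (F : pt -> Cl) :
  open_Rm m Om ->
  (k <= m)%nat ->
  (2 * k <> m)%nat ->
  CkCl m 4 Om F ->
  (forall x, Om x -> is_kvector m k (F x)) ->
  (harmonic m Om F ->
     (inframonogenic m Om F <-> left3mono_Fx m Om F) /\
     (inframonogenic m Om F <-> right3mono_xF m Om F) /\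
     (inframonogenic m Om F <-> biharm_xFx m Om F)) /\
  (inframonogenic m Om F ->
     (harmonic m Om F <-> left3mono_Fx m Om F) /\
     (harmonic m Om F <-> right3mono_xF m Om F) /\
     (harmonic m Om F <-> biharm_xFx m Om F)).
Proof.
  intros HO _ Hk HF Hkv.
  rewrite harmonic_iff, (inframonogenic_iff m Om HO F HF), left3_iff, right3_iff, biharm_iff.
  split.
  - apply (harmonic_case m Om HO k F HF Hkv).
  - apply (inframonogenic_case m Om HO k F HF Hkv Hk).
Qed.
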